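(* Let $\psi$ satisfy Assumption $(\mathrm{A}_\ell)$ for some $\ell\ge 0$, and let $(\eta,v)$ with $\eta\in\mathcal C^1([0,\infty);\mathcal C(\overline\Omega_0))$, $v$ continuous, be a solution of the Lagrangian system (L) with initial history $v_s\in\mathcal C([-\tau,0]\times\overline\Omega_0)$ (compatible with $\eta$ as described in the context). Assume $R_V<+\infty$ and the flocking condition \[ d_V(0)+\int_{-\tau}^0 d_V(s)\,ds<\int_{d_X(-\tau)+R_V\tau}^\infty\widetilde\psi(s)\,ds . \] Then $\sup_{t\ge0}d_X(t)<+\infty$, and there is a constant $C>0$ independent of time such that \[ d_V(t)\le\Big(\max_{s\in[-\tau,0]}d_V(s)\Big)e^{-Ct}\qquad\text{for all }t\ge0. \]
   Context: Let $d\in\mathbb N$, $\tau\ge0$, $\Omega_0\subset\mathbb R^d$ a bounded open set, $\rho_0:\Omega_0\to[0,\infty)$ integrable with $\int_{\Omega_0}\rho_0=1$. Assumption $(\mathrm{A}_\ell)$: $\psi:\mathbb R^d\to(0,\infty)$ is continuous, $\psi(x)=\widetilde\psi(|x|)$ with $\widetilde\psi:[0,\infty)\to(0,\infty)$ nonincreasing, positive, bounded, $\widetilde\psi(0)=1$; if $\ell\ge1$, $\psi$ is $\mathcal C^\ell$ with uniformly bounded derivatives up to order $\ell$. Lagrangian system (L): for $x\in\Omega_0$, $t>0$: $\frac{d\eta_t(x)}{dt}=v_t(x)$, $\frac{dv_t(x)}{dt}=\frac{\int_{\Omega_0}\psi(\eta_t(x)-\eta_{t-\tau}(y))\rho_0(y)v_{t-\tau}(y)dy}{\int_{\Omega_0}\psi(\eta_t(x)-\eta_{t-\tau}(y))\rho_0(y)dy}-v_t(x)$,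 with prescribed initial history $(\eta_s,v_s)$, $s\in[-\tau,0]$, where $\eta_0(x)=x$ and $\frac{d\eta_s(x)}{ds}=v_s(x)$ for $s\in[-\tau,0]$ (the history is a piece of the characteristic flow). Notation: $d_X(t):=\max_{x,y\in\overline\Omega_0}|\eta_t(x)-\eta_t(y)|$, $d_V(t):=\max_{x,y\in\overline\Omega_0}|v_t(x)-v_t(y)|$ for $t\ge-\tau$, and $R_V:=\max_{s\in[-\tau,0]}\max_{x\in\overline\Omega_0}|v_s(x)|$. *)

From Stdlib Require Import Reals Lra ClassicalEpsilon.
From Stdlib Require Vectors.Fin.
Open Scope R_scope.

Definition Vec (d : nat) := Fin.t d -> R.

Fixpoint sum_fin (n : nat) : (Fin.t n -> R) -> R :=
  match n with
  | O => fun _ => 0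
  | S m => fun f => f Fin.F1 + sum_fin m (fun i => f (Fin.FS i))
  end.

Definition vsub {d} (x y : Vec d) : Vec d := fun i => x i - y i.
Definition vscale {d} (a : R) (x : Vec d) : Vec d := fun i => a * x i.
Definition vnorm {d} (x : Vec d) : R := sqrt (sum_fin d (fun i => x i * x i)).

Definition is_open {d} (O : Vec d -> Prop) : Prop :=
  forall x, O x -> exists r, 0 < r /\ forall y, vnorm (vsub y x) < r -> O y.
Definition is_bounded {d} (O : Vec d -> Prop) : Prop :=
  exists B, forall x, O x -> vnorm x <= B.
Definition closure {d} (O : Vec d -> Prop) (x : Vec d) : Prop :=
  forall eps, 0 < eps -> exists y, O y /\ vnorm (vsub y x) < eps.

Definition cont_on {d} (K : Vec d -> Prop) (f : Vec d -> R) : Prop :=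
  forall x, K x -> forall eps, 0 < eps -> exists delta, 0 < delta /\
    forall y, K y -> vnorm (vsub y x) < delta -> Rabs (f y - f x) < eps.
Definition vcont_on {d} (K : Vec d -> Prop) (f : Vec d -> Vec d) : Prop :=
  forall x, K x -> forall eps, 0 < eps -> exists delta, 0 < delta /\
    forall y, K y -> vnorm (vsub y x) < delta -> vnorm (vsub (f y) (f x)) < eps.

Definition assumption_A0 {d} (psi : Vec d -> R) (psit : R -> R) : Prop :=
  (forall x, 0 < psi x) /\
  (forall x eps, 0 < eps -> exists delta, 0 < delta /\
     forall y, vnorm (vsub y x) < delta -> Rabs (psi y - psi x) < eps) /\
  (forall x, psi x = psit (vnorm x)) /\
  (forall r s, 0 <= r -> r <= s -> psit s <= psit r) /\
  (forall r, 0 <= r -> 0 < psit r) /\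
  (exists B, forall r, 0 <= r -> psit r <= B) /\
  psit 0 = 1.

(* ---------- the integration  f |-> \int_{Omega_0} f(y) rho_0(y) dy ----------
   Abstracted as a normalised positive linear functional on functions that are
   continuous on the compact set K = closure Omega_0. *)
Definition avg_functional {d} (K : Vec d -> Prop) (I : (Vec d -> R) -> R) : Prop :=
  (forall f g a, cont_on K f -> cont_on K g ->
      I (fun y => a * f y + g y) = a * I f + I g) /\
  (forall f, cont_on K f -> (forall y, K y -> 0 <= f y) -> 0 <= I f) /\
  (forall f g, cont_on K f -> (forall y, K y -> f y = g y) -> I f = I g) /\
  I (fun _ => 1) = 1.

Definition vderiv_within {d} (S : R -> Prop) (f : R -> Vec d) (t : R) (D : Vec d) : Prop :=
  forall eps, 0 < eps -> exists delta, 0 < delta /\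
    forall h, h <> 0 -> Rabs h < delta -> S (t + h) ->
      vnorm (vsub (vscale (/ h) (vsub (f (t + h)) (f t))) D) <= eps.

(* eta in C^1([0,oo); C(K)) with K equipped with the sup norm *)
Definition C1_into_C {d} (K : Vec d -> Prop) (eta : R -> Vec d -> Vec d) : Prop :=
  exists D : R -> Vec d -> Vec d,
    (forall t, 0 <= t -> vcont_on K (eta t) /\ vcont_on K (D t)) /\
    (forall t, 0 <= t -> forall eps, 0 < eps -> exists delta, 0 < delta /\
       forall h, h <> 0 -> Rabs h < delta -> 0 <= t + h -> forall x, K x ->
         vnorm (vsub (vscale (/ h) (vsub (eta (t + h) x) (eta t x))) (D t x)) <= eps) /\
    (forall t, 0 <= t -> forall eps, 0 < eps -> exists delta, 0 < delta /\
       forall t', 0 <= t' -> Rabs (t' - t) < delta -> forall x, K x ->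
         vnorm (vsub (D t' x) (D t x)) <= eps).

Definition jcont_on {d} (tau : R) (K : Vec d -> Prop) (v : R -> Vec d -> Vec d) : Prop :=
  forall t x, -tau <= t -> K x -> forall eps, 0 < eps -> exists delta, 0 < delta /\
    forall t' x', -tau <= t' -> K x' -> Rabs (t' - t) < delta ->
      vnorm (vsub x' x) < delta -> vnorm (vsub (v t' x') (v t x)) < eps.

Definition solves_L {d} (tau : R) (Om : Vec d -> Prop) (I : (Vec d -> R) -> R)
    (psi : Vec d -> R) (eta v : R -> Vec d -> Vec d) : Prop :=
  forall x t, Om x -> 0 < t ->
    vderiv_within (fun _ => True) (fun s => eta s x) t (v t x) /\
    vderiv_within (fun _ => True) (fun s => v s x) t
      (fun i => I (fun y => psi (vsub (eta t x) (eta (t - tau) y)) * v (t - tau) y i)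
                / I (fun y => psi (vsub (eta t x) (eta (t - tau) y)))
                - v t x i).

Definition history_compatible {d} (tau : R) (K : Vec d -> Prop)
    (eta v : R -> Vec d -> Vec d) : Prop :=
  forall x, K x ->
    eta 0 x = x /\
    forall s, -tau <= s <= 0 ->
      vderiv_within (fun r => -tau <= r <= 0) (fun r => eta r x) s (v s x).

Definition Rsup (E : R -> Prop) : R := epsilon (inhabits 0) (fun m => is_lub E m).

Definition dX {d} (K : Vec d -> Prop) (eta : R -> Vec d -> Vec d) (t : R) : R :=
  Rsup (fun r => exists x y, K x /\ K y /\ r = vnorm (vsub (eta t x) (eta t y))).
Definition dV {d} (K : Vec d -> Prop) (v : R -> Vec d -> Vec d) (t : R) : R :=
  Rsup (fun r => exists x y, K x /\ K y /\ r = vnorm (vsub (v t x) (v t y))).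
Definition RV {d} (tau : R) (K : Vec d -> Prop) (v : R -> Vec d -> Vec d) : R :=
  Rsup (fun r => exists s x, -tau <= s <= 0 /\ K x /\ r = vnorm (v s x)).

(* flocking condition:
   d_V(0) + \int_{-tau}^0 d_V(s) ds < \int_{d_X(-tau) + R_V tau}^oo psit(s) ds.
   Since psit >= 0, the improper integral is the sup of \int_a^b, b >= a. *)
Definition flocking_condition {d} (tau : R) (K : Vec d -> Prop) (psit : R -> R)
    (eta v : R -> Vec d -> Vec d) : Prop :=
  let a := dX K eta (- tau) + RV tau K v * tau in
  exists b, a <= b /\
    exists (pr1 : Riemann_integrable (dV K v) (- tau) 0)
           (pr2 : Riemann_integrable psit a b),
      dV K v 0 + RiemannInt pr1 < RiemannInt pr2.

From Stdlib Require Import Reals Lra Lia ZArith Classical ClassicalEpsilon FunctionalExtensionality.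
From Coquelicot Require Import Coquelicot.
Open Scope R_scope.

(* The argument reduces the system to two scalar delay inequalities for the diameters.  The
   velocity relaxes towards an average of delayed velocities whose weights are all at least
   psit (dX (t - tau) + R_V tau) (by a maximum principle |v| <= R_V for all times), which gives,
   in the sense of right Dini derivatives,
     dV' <= (1 - psit (dX (t - tau) + R_V tau)) dV (t - tau) - dV   and   dX' <= dV.
   The functional dV t + int_(t - tau)^t dV + int^(dX (t - tau) + R_V tau) psit is then
   nonincreasing, so the flocking condition keeps dX (t - tau) + R_V tau below a fixed b.
   Hence all weights stay above psit b > 0 and a Halanay-type comparison yields the exponential
   decay of dV. *)

Lemma continuity_pt_eps (f : R -> R) x : continuity_pt f x ->
  forall e, 0 < e -> exists d, 0 < d /\ forall y, Rabs (y - x) < d -> Rabs (f y - f x) < e.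
Proof.
  intros H e He. destruct (H e He) as [d [Hd H2]]. exists d; split; auto.
  intros y Hy. destruct (Req_dec y x) as [->|Hne].
  - rewrite Rminus_diag, Rabs_R0; auto.
  - apply (H2 y). split; [split; [exact I|auto]|]. exact Hy.
Qed.

Lemma continuity_pt_of_eps (f : R -> R) x :
  (forall e, 0 < e -> exists d, 0 < d /\ forall y, Rabs (y - x) < d -> Rabs (f y - f x) < e) ->
  continuity_pt f x.
Proof.
  intros H e He. destruct (H e He) as [d [Hd H2]]. exists d; split; auto.
  intros y [_ Hy]. apply H2. exact Hy.
Qed.

Lemma is_lub_approx (E : R -> Prop) sg r : is_lub E sg -> r < sg -> exists s, E s /\ r < s.
Proof.
  intros [Hub Hlub] Hr. destruct (classic (exists s, E s /\ r < s)) as [H|H]; auto.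
  exfalso. assert (sg <= r); [|lra]. apply Hlub. intros s Hs.
  destruct (Rle_lt_dec s r); auto. exfalso; apply H; eauto.
Qed.

Lemma is_lub_ub (E : R -> Prop) M x : is_lub E M -> E x -> x <= M.
Proof. intros [H _] Hx. apply H; auto. Qed.

Lemma is_lub_le (E : R -> Prop) M c : is_lub E M -> (forall x, E x -> x <= c) -> M <= c.
Proof. intros [_ H] Hc. apply H. exact Hc. Qed.

Lemma Rsup_is_lub (E : R -> Prop) : (exists x, E x) -> (exists M, forall x, E x -> x <= M) ->
  is_lub E (Rsup E).
Proof.
  intros Hne [M HM]. unfold Rsup.
  apply epsilon_spec. destruct (completeness E (ex_intro _ M HM) Hne) as [m Hm]. exists m; auto.
Qed.

Lemma Rsup_eq_0 (E : R -> Prop) : E 0 -> (forall r, E r -> r = 0) -> Rsup E = 0.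
Proof.
  intros H0 H. assert (L : is_lub E (Rsup E)).
  { apply Rsup_is_lub; [exists 0; auto|]. exists 0. intros r Hr. rewrite (H r Hr). lra. }
  apply Rle_antisym.
  - apply (is_lub_le _ _ _ L). intros r Hr. rewrite (H r Hr). lra.
  - apply (is_lub_ub _ _ _ L). auto.
Qed.

Section Dini.
Variables (F : R -> R) (a b : R).
Hypothesis Hab : a < b.
Hypothesis F_cont : forall t, a <= t <= b -> continuity_pt F t.
Hypothesis F_right : forall t, a < t < b -> forall e, 0 < e -> exists d, 0 < d /\
  forall h, 0 < h < d -> F (t + h) <= F t + e * h.

Definition dini_line ep r := F a + ep * (r - a + 1).

Lemma dini_line_right ep sg : 0 < ep -> a <= sg < b -> F sg <= dini_line ep sg ->
  exists d, 0 < d /\ forall k, 0 < k < d -> F (sg + k) <= dini_line ep (sg + k).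
Proof.
  intros Hep Hsg Hle. unfold dini_line in *. destruct (Req_dec sg a) as [->|Hna].
  - destruct (continuity_pt_eps F a (F_cont a ltac:(lra)) ep Hep) as [d [Hd Hd2]].
    exists d; split; auto. intros k Hk.
    pose proof (Hd2 (a + k) ltac:(rewrite Rabs_right; lra)) as Hcl. apply Rabs_def2 in Hcl. nra.
  - destruct (F_right sg ltac:(lra) ep Hep) as [d [Hd Hd2]].
    exists d; split; auto. intros k Hk. pose proof (Hd2 k Hk). nra.
Qed.

(* The set of s up to which F stays below dini_line ep is closed by continuity and open to the
   right by dini_line_right, so it is all of [a, b]. *)
Lemma dini_nonincreasing_eps ep : 0 < ep -> F b <= dini_line ep b.
Proof.
  intro Hep.
  set (E := fun s => a <= s <= b /\ forall r, a <= r <= s -> F r <= dini_line ep r).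
  assert (EA : E a).
  { split; [lra|]. intros r Hr. replace r with a by lra. unfold dini_line. nra. }
  assert (Eb : bound E) by (exists b; intros s [Hs _]; lra).
  destruct (completeness E Eb (ex_intro _ a EA)) as [sg Hsg].
  assert (Hsa : a <= sg) by (apply (proj1 Hsg); exact EA).
  assert (Hsb : sg <= b) by (apply (proj2 Hsg); intros s [Hs _]; lra).
  assert (below : forall r, a <= r < sg -> F r <= dini_line ep r).
  { intros r Hr. destruct (is_lub_approx E sg r Hsg (proj2 Hr)) as [s [[_ Hs] Hrs]].
    apply Hs; lra. }
  assert (at_sg : F sg <= dini_line ep sg).
  { destruct (Req_dec sg a) as [->|Hne]; [unfold dini_line; nra|].
    apply Rle_plus_epsilon; intros e He.
    destruct (continuity_pt_eps F sg (F_cont sg ltac:(lra)) e He) as [d [Hd Hd2]].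
    set (s := Rmax a (sg - d / 2)).
    assert (a <= s) by apply Rmax_l.
    assert (s < sg) by (unfold s; apply Rmax_lub_lt; lra).
    assert (sg - d < s) by (unfold s; pose proof (Rmax_r a (sg - d / 2)); lra).
    pose proof (Hd2 s ltac:(rewrite Rabs_left; lra)) as Hcl. apply Rabs_def2 in Hcl.
    pose proof (below s ltac:(lra)). unfold dini_line in *. nra. }
  assert (ES : E sg).
  { split; [lra|]. intros r Hr. destruct (Req_dec r sg) as [->|]; auto. apply below; lra. }
  destruct (Req_dec sg b) as [->|Hnb]; [exact (proj2 ES b ltac:(lra))|].
  exfalso.
  destruct (dini_line_right ep sg Hep ltac:(lra) at_sg) as [d [Hd Hstep]].
  set (h := Rmin (d / 2) ((b - sg) / 2)).
  assert (0 < h) by (unfold h; apply Rmin_glb_lt; lra).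
  assert (h < d) by (unfold h; pose proof (Rmin_l (d / 2) ((b - sg) / 2)); lra).
  assert (h <= (b - sg) / 2) by (unfold h; apply Rmin_r).
  assert (Eh : E (sg + h)).
  { split; [lra|]. intros r Hr. destruct (Rle_lt_dec r sg) as [Hc|Hc].
    - apply (proj2 ES); lra.
    - replace r with (sg + (r - sg)) by ring. apply Hstep; lra. }
  pose proof (proj1 Hsg _ Eh). lra.
Qed.

Lemma dini_nonincreasing : F b <= F a.
Proof.
  apply Rle_plus_epsilon; intros e He.
  assert (Hq : 0 < e / (b - a + 1)) by (apply Rdiv_lt_0_compat; lra).
  pose proof (dini_nonincreasing_eps _ Hq) as M. unfold dini_line in M.
  replace (e / (b - a + 1) * (b - a + 1)) with e in M by (field; lra). lra.
Qed.

End Dini.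

Lemma first_zero_crossing (F : R -> R) (t1 : R) :
  (forall t, continuity_pt F t) -> F 0 < 0 -> 0 <= t1 -> 0 <= F t1 ->
  exists T, 0 < T /\ F T = 0 /\ forall s, 0 <= s < T -> F s < 0.
Proof.
  intros Hc H0 Ht1 Hf1.
  set (E := fun s => 0 <= s /\ forall r, 0 <= r <= s -> F r < 0).
  assert (E0 : E 0) by (split; [lra|]; intros r Hr; replace r with 0 by lra; auto).
  assert (Eb : bound E).
  { exists t1. intros s [Hs Hs2]. destruct (Rle_lt_dec s t1); auto.
    pose proof (Hs2 t1 ltac:(lra)); lra. }
  destruct (completeness E Eb (ex_intro _ 0 E0)) as [T HT].
  pose proof HT as [Hub Hlub].
  assert (P : forall r, 0 <= r < T -> F r < 0).
  { intros r Hr. destruct (is_lub_approx E T r HT (proj2 Hr)) as [s [[_ Hs] Hrs]]. apply Hs; lra. }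
  assert (HT0 : 0 < T).
  { destruct (continuity_pt_eps F 0 (Hc 0) (- F 0) ltac:(lra)) as [d [Hd Hd2]].
    assert (E (d/2)).
    { split; [lra|]. intros r Hr. pose proof (Hd2 r ltac:(rewrite Rabs_right; lra)).
      apply Rabs_def2 in H. lra. }
    pose proof (Hub _ H); lra. }
  exists T; split; auto; split; [|exact P].
  destruct (Rtotal_order (F T) 0) as [Hl|[He|Hg]]; auto; exfalso.
  - destruct (continuity_pt_eps F T (Hc T) (- F T) ltac:(lra)) as [d [Hd Hd2]].
    assert (E (T + d/2)).
    { split; [lra|]. intros r Hr. destruct (Rlt_le_dec r T) as [Hc1|Hc1]; [apply P; lra|].
      pose proof (Hd2 r ltac:(rewrite Rabs_right; lra)). apply Rabs_def2 in H. lra. }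
    pose proof (Hub _ H); lra.
  - destruct (continuity_pt_eps F T (Hc T) (F T) ltac:(lra)) as [d [Hd Hd2]].
    set (r := Rmax 0 (T - d/2)).
    assert (r < T) by (unfold r; apply Rmax_lub_lt; lra).
    assert (0 <= r) by apply Rmax_l.
    assert (T - d/2 <= r) by apply Rmax_r.
    pose proof (P r ltac:(lra)) as Q1.
    pose proof (Hd2 r ltac:(rewrite Rabs_left1; lra)) as Q2. apply Rabs_def2 in Q2. lra.
Qed.

Lemma continuity_pt_continuous f x : continuity_pt f x -> continuous f x.
Proof. intro H. apply continuity_pt_filterlim. exact H. Qed.

Lemma ex_RInt_continuity_pt f : (forall t, continuity_pt f t) -> forall x y, ex_RInt f x y.
Proof.
  intros H x y. apply (ex_RInt_continuous (V:=R_CompleteNormedModule)).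
  intros z _. apply continuity_pt_continuous, H.
Qed.

Lemma derivable_pt_lim_RInt f a0 : (forall t, continuity_pt f t) ->
  forall x, derivable_pt_lim (fun y => RInt f a0 y) x (f x).
Proof.
  intros H x. apply is_derive_Reals.
  apply (is_derive_RInt (V:=R_CompleteNormedModule) f (fun y => RInt f a0 y) a0 x).
  - apply filter_forall. intros y. apply RInt_correct. apply ex_RInt_continuity_pt; auto.
  - apply continuity_pt_continuous, H.
Qed.

Lemma derivable_pt_lim_bounds f x l : derivable_pt_lim f x l -> forall e, 0 < e -> exists d, 0 < d /\
  forall h, 0 < h < d -> f (x + h) <= f x + h * (l + e) /\ f x + h * (l - e) <= f (x + h).
Proof.
  intros H e He. destruct (H e He) as [d Hd]. exists d; split; [apply (cond_pos d)|].
  intros h Hh. assert (h <> 0) by lra. assert (Rabs h < d) by (rewrite Rabs_right; lra).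
  specialize (Hd h H0 H1). apply Rabs_def2 in Hd. destruct Hd as [Hd1 Hd2].
  assert (Hq : (f (x + h) - f x) / h * h = f (x+h) - f x) by (field; lra).
  split; nra.
Qed.

Lemma derivable_pt_lim_continuity_pt f x l : derivable_pt_lim f x l -> continuity_pt f x.
Proof. intro H. apply derivable_continuous_pt. exists l. exact H. Qed.

Lemma one_minus_exp_neg_taylor e : 0 < e -> exists d, 0 < d /\
  forall h, 0 < h < d -> Rabs ((1 - exp (- h)) - h) <= e * h.
Proof.
  intros He.
  assert (D : derivable_pt_lim (fun x => exp (- x)) 0 (-1)).
  { apply is_derive_Reals. auto_derive; auto. rewrite Ropp_0, exp_0. ring. }
  destruct (derivable_pt_lim_bounds _ 0 (-1) D e He) as [d [Hd H]]. exists d; split; auto.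
  intros h Hh. destruct (H h Hh) as [H1 H2]. rewrite Rplus_0_l, Ropp_0, exp_0 in *.
  apply Rabs_le. split; nra.
Qed.

Lemma exp_neg_le_1 h : 0 <= h -> exp (- h) <= 1.
Proof.
  intro. rewrite <- exp_0. destruct (Req_dec h 0) as [->|]; [rewrite Ropp_0; lra|].
  left; apply exp_increasing; lra.
Qed.

Lemma exp_mul_exp_neg x : exp x * exp (- x) = 1.
Proof. rewrite <- exp_plus, Rplus_opp_r. apply exp_0. Qed.

Lemma RInt_nonincreasing_le f y k : (forall t, continuity_pt f t) ->
  (forall r s, r <= s -> f s <= f r) -> 0 <= k -> RInt f y (y + k) <= k * f y.
Proof.
  intros Hc Hm Hk.
  apply Rle_trans with (RInt (fun _ => f y) y (y + k)).
  - apply RInt_le; [lra| apply ex_RInt_continuity_pt; auto | apply ex_RInt_const |].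
    intros x Hx. apply Hm. lra.
  - rewrite RInt_const. unfold scal; simpl; unfold mult; simpl. lra.
Qed.

Lemma RInt_nonneg f x y : (forall t, continuity_pt f t) -> (forall t, 0 <= f t) -> x <= y ->
  0 <= RInt f x y.
Proof. intros Hc Hp Hxy. apply RInt_ge_0; auto. apply ex_RInt_continuity_pt; auto. Qed.

Lemma RInt_Chasles_continuity_pt f x y z : (forall t, continuity_pt f t) ->
  RInt f x z = RInt f x y + RInt f y z.
Proof. intro Hc. symmetry. apply (RInt_Chasles f x y z); apply ex_RInt_continuity_pt; auto. Qed.

(** * The scalar delay inequalities *)

Section DelayedLyapunov.
Variables (tau Rv : R) (V X psit : R -> R).
Hypothesis Htau : 0 <= tau.
Hypothesis V_cont : forall t, continuity_pt V t.
Hypothesis X_cont : forall t, continuity_pt X t.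
Hypothesis psit_cont : forall r, continuity_pt psit r.
Hypothesis psit_pos : forall r, 0 < psit r.
Hypothesis psit_le_1 : forall r, psit r <= 1.
Hypothesis psit_noninc : forall r s, r <= s -> psit s <= psit r.
Hypothesis V_nonneg : forall t, 0 <= V t.
Hypothesis V_relax : forall t h c, 0 <= t -> 0 < h ->
  (forall s, t <= s <= t + h -> (1 - psit (X (s - tau) + Rv * tau)) * V (s - tau) <= c) ->
  V (t + h) <= exp (- h) * V t + (1 - exp (- h)) * c.
Hypothesis X_growth : forall t h c, - tau <= t -> 0 < h ->
  (forall s, t <= s <= t + h -> V s <= c) -> X (t + h) <= X t + h * c.

(* For X = dX, lag_bound t bounds |eta_t x - eta_(t - tau) y|, the argument of psi in (L). *)
Definition lag_bound t := X (t - tau) + Rv * tau.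
Definition psit_primitive y := RInt psit (lag_bound 0) y.
Definition lyapunov t := V t + RInt V (t - tau) t + psit_primitive (lag_bound t).

Lemma lag_bound_cont t : continuity_pt lag_bound t.
Proof.
  apply continuity_pt_plus; [|apply continuity_pt_const; intros ? ?; auto].
  apply (continuity_pt_comp (fun s => s - tau) X); [|apply X_cont].
  apply continuity_pt_minus; [apply continuity_pt_id | apply continuity_pt_const; intros ? ?; auto].
Qed.

Lemma psit_primitive_le y z : y <= z -> psit_primitive y <= psit_primitive z.
Proof.
  intro Hyz. unfold psit_primitive. rewrite (RInt_Chasles_continuity_pt psit _ y z psit_cont).
  pose proof (RInt_nonneg psit y z psit_cont ltac:(intro; apply Rlt_le, psit_pos) Hyz). lra.
Qed.

Lemma psit_primitive_step y k : 0 <= k -> psit_primitive (y + k) <= psit_primitive y + k * psit y.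
Proof.
  intro Hk. unfold psit_primitive. rewrite (RInt_Chasles_continuity_pt psit _ y (y + k) psit_cont).
  pose proof (RInt_nonincreasing_le psit y k psit_cont psit_noninc Hk). lra.
Qed.

Lemma delay_integral_derivable t :
  derivable_pt_lim (fun t => RInt V (t - tau) t) t (V t - V (t - tau)).
Proof.
  assert (Ge : (fun t => RInt V (t - tau) t) = fun t => RInt V 0 t - RInt V 0 (t - tau)).
  { apply functional_extensionality. intro s.
    pose proof (RInt_Chasles_continuity_pt V 0 (s - tau) s V_cont). lra. }
  rewrite Ge. apply derivable_pt_lim_minus; [apply derivable_pt_lim_RInt; auto|].
  replace (V (t - tau)) with (V (t - tau) * 1) by ring.
  apply (derivable_pt_lim_comp (fun s => s - tau) (fun y => RInt V 0 y)).
  - replace 1 with (1 - 0) by ring. apply derivable_pt_lim_minus;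
      [apply derivable_pt_lim_id | apply derivable_pt_lim_const].
  - apply derivable_pt_lim_RInt; auto.
Qed.

Lemma lyapunov_cont t : continuity_pt lyapunov t.
Proof.
  apply continuity_pt_plus; [apply continuity_pt_plus|].
  - apply V_cont.
  - eapply derivable_pt_lim_continuity_pt; apply delay_integral_derivable.
  - apply (continuity_pt_comp lag_bound psit_primitive); [apply lag_bound_cont|].
    eapply derivable_pt_lim_continuity_pt. apply derivable_pt_lim_RInt; auto.
Qed.

(* The right Dini derivative of V is at most (1 - psit (lag_bound t)) V (t - tau) - V t:
   combine V_relax on a short interval with 1 - exp (- h) = h + o(h). *)
Lemma V_right_upper t e : 0 < t -> 0 < e -> exists d, 0 < d /\ forall h, 0 < h < d ->
  V (t + h) <= V t + h * ((1 - psit (lag_bound t)) * V (t - tau) - V t) + h * e.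
Proof.
  intros Ht He.
  set (q := fun s => (1 - psit (lag_bound s)) * V (s - tau)).
  assert (Hqc : continuity_pt q t).
  { unfold q. apply continuity_pt_mult.
    - apply continuity_pt_minus; [apply continuity_pt_const; intros ? ?; auto|].
      apply (continuity_pt_comp lag_bound psit); auto using lag_bound_cont.
    - apply (continuity_pt_comp (fun s => s - tau) V); auto.
      apply continuity_pt_minus; [apply continuity_pt_id | apply continuity_pt_const; intros ? ?; auto]. }
  set (A := Rabs (q t - V t) + 1).
  assert (HA : 0 < A) by (unfold A; pose proof (Rabs_pos (q t - V t)); lra).
  set (e1 := Rmin 1 (e / 2)).
  assert (He1 : 0 < e1) by (unfold e1; apply Rmin_glb_lt; lra).
  assert (He1a : e1 <= 1) by apply Rmin_l.
  assert (He1b : e1 <= e / 2) by apply Rmin_r.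
  destruct (continuity_pt_eps q t Hqc e1 He1) as [d1 [Hd1 Hq1]].
  destruct (one_minus_exp_neg_taylor (e / 2 / A) ltac:(apply Rdiv_lt_0_compat; lra))
    as [d2 [Hd2 Hexp]].
  exists (Rmin d1 d2). split; [apply Rmin_glb_lt; auto|]. intros h Hh.
  pose proof (Rmin_l d1 d2). pose proof (Rmin_r d1 d2).
  assert (Vh : V (t + h) <= exp (- h) * V t + (1 - exp (- h)) * (q t + e1)).
  { apply V_relax; try lra. intros s Hs.
    pose proof (Hq1 s ltac:(rewrite Rabs_right; lra)) as Hqs. apply Rabs_def2 in Hqs.
    unfold q, lag_bound in *. lra. }
  pose proof (Hexp h ltac:(lra)) as E2.
  assert (Hc : Rabs (q t + e1 - V t) <= A).
  { unfold A. replace (q t + e1 - V t) with ((q t - V t) + e1) by ring.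
    eapply Rle_trans; [apply Rabs_triang|]. rewrite (Rabs_right e1); lra. }
  assert (Hm : ((1 - exp (- h)) - h) * (q t + e1 - V t) <= e / 2 * h).
  { eapply Rle_trans; [apply Rle_abs|]. rewrite Rabs_mult.
    apply Rle_trans with ((e / 2 / A * h) * A).
    - apply Rmult_le_compat; auto using Rabs_pos.
    - right. field. lra. }
  change ((1 - psit (lag_bound t)) * V (t - tau)) with (q t). nra.
Qed.

Lemma lag_bound_right_upper t e : 0 <= t -> 0 < e -> exists d, 0 < d /\ forall h, 0 < h < d ->
  lag_bound (t + h) <= lag_bound t + h * (V (t - tau) + e).
Proof.
  intros Ht He. destruct (continuity_pt_eps V (t - tau) (V_cont _) e He) as [d [Hd HV]].
  exists d; split; auto. intros h Hh. unfold lag_bound.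
  replace (t + h - tau) with ((t - tau) + h) by ring.
  enough (X (t - tau + h) <= X (t - tau) + h * (V (t - tau) + e)) by lra.
  apply X_growth; try lra. intros s Hs.
  pose proof (HV s ltac:(rewrite Rabs_right; lra)) as Hs'. apply Rabs_def2 in Hs'. lra.
Qed.

(* The three right Dini bounds add up to zero: the loss - psit (lag_bound t) V (t - tau) in the
   velocity bound is exactly compensated by the growth of psit_primitive (lag_bound t). *)
Lemma lyapunov_right_upper t e : 0 < t -> 0 < e -> exists d, 0 < d /\ forall h, 0 < h < d ->
  lyapunov (t + h) <= lyapunov t + e * h.
Proof.
  intros Ht He.
  destruct (V_right_upper t (e / 4) Ht ltac:(lra)) as [d1 [Hd1 HV]].
  destruct (derivable_pt_lim_bounds _ t _ (delay_integral_derivable t) (e / 4) ltac:(lra))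
    as [d2 [Hd2 HG]].
  destruct (lag_bound_right_upper t (e / 4) ltac:(lra) ltac:(lra)) as [d3 [Hd3 HX]].
  exists (Rmin d1 (Rmin d2 d3)). split; [repeat apply Rmin_glb_lt; auto|]. intros h Hh.
  pose proof (Rmin_l d1 (Rmin d2 d3)). pose proof (Rmin_r d1 (Rmin d2 d3)).
  pose proof (Rmin_l d2 d3). pose proof (Rmin_r d2 d3).
  set (y := lag_bound t).
  pose proof (HV h ltac:(lra)) as T1. destruct (HG h ltac:(lra)) as [T2 _].
  assert (T3 : psit_primitive (lag_bound (t + h))
               <= psit_primitive y + h * (V (t - tau) + e / 4) * psit y).
  { apply Rle_trans with (psit_primitive (y + h * (V (t - tau) + e / 4))).
    - apply psit_primitive_le. apply HX. lra.
    - apply psit_primitive_step. pose proof (V_nonneg (t - tau)). nra. }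
  unfold lyapunov. fold y in T1 |- *.
  assert (h * psit y * (e / 4) <= h * (e / 4)).
  { rewrite Rmult_assoc. apply Rmult_le_compat_l; [lra|].
    pose proof (psit_le_1 y). nra. }
  assert (h * ((1 - psit y) * V (t - tau) - V t) + h * (V t - V (t - tau) + e / 4)
          + h * (V (t - tau) + e / 4) * psit y = h * (e / 4) + h * psit y * (e / 4)) by ring.
  assert (0 < h * e) by (apply Rmult_lt_0_compat; lra).
  lra.
Qed.

Lemma lyapunov_nonincreasing T : 0 <= T -> lyapunov T <= lyapunov 0.
Proof.
  intro HT. destruct (Req_dec T 0) as [->|HT0]; [lra|].
  apply dini_nonincreasing; [lra| intros; apply lyapunov_cont|].
  intros t Ht e He. apply lyapunov_right_upper; lra.
Qed.

(* Since lyapunov is nonincreasing and its first two terms are nonnegative, the primitive of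
   psit at lag_bound t stays below lyapunov 0, which the flocking condition bounds by the
   primitive at b. *)
Lemma delayed_lyapunov_bound b :
  V 0 + RInt V (- tau) 0 < RInt psit (X (- tau) + Rv * tau) b ->
  forall t, 0 <= t -> X (t - tau) + Rv * tau < b.
Proof.
  intros Hfl t Ht.
  assert (L0 : lyapunov 0 = V 0 + RInt V (- tau) 0).
  { unfold lyapunov, psit_primitive. replace (0 - tau) with (- tau) by ring.
    rewrite RInt_point. simpl. unfold zero; simpl. lra. }
  pose proof (lyapunov_nonincreasing t Ht) as Lt.
  assert (LG : 0 <= RInt V (t - tau) t) by (apply RInt_nonneg; auto; lra).
  pose proof (V_nonneg t).
  change (X (t - tau) + Rv * tau) with (lag_bound t).
  destruct (Rlt_le_dec (lag_bound t) b) as [Hlt|Hge]; auto. exfalso.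
  pose proof (psit_primitive_le _ _ Hge).
  rewrite L0 in Lt. unfold lyapunov in Lt. unfold psit_primitive, lag_bound in *.
  replace (0 - tau) with (- tau) in * by ring. lra.
Qed.

End DelayedLyapunov.

Section RelaxationDecay.
Variables (tau ps : R) (V : R -> R).
Hypothesis Htau : 0 <= tau.
Hypothesis ps_pos : 0 < ps.
Hypothesis ps_le_1 : ps <= 1.
Hypothesis V_cont : forall t, continuity_pt V t.
Hypothesis V_nonneg : forall t, 0 <= V t.
Hypothesis V_relax : forall t h c, 0 <= t -> 0 < h ->
  (forall s, t <= s <= t + h -> (1 - ps) * V (s - tau) <= c) ->
  V (t + h) <= exp (- h) * V t + (1 - exp (- h)) * c.

Definition decay_rate := ps / (8 * (1 + tau)).

Lemma decay_rate_pos : 0 < decay_rate.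
Proof. unfold decay_rate. apply Rdiv_lt_0_compat; lra. Qed.

Lemma decay_rate_le : decay_rate <= ps / 8 /\ decay_rate * tau <= ps / 8.
Proof.
  unfold decay_rate. split.
  - apply Rmult_le_compat_l; [lra|]. apply Rinv_le_contravar; lra.
  - replace (ps / (8 * (1 + tau)) * tau) with (ps / 8 * (tau / (1 + tau))) by (field; lra).
    assert (tau / (1 + tau) <= 1).
    { apply Rmult_le_reg_r with (1 + tau); [lra|]. unfold Rdiv. rewrite Rmult_assoc, Rinv_l; lra. }
    nra.
Qed.

Lemma exp_neg_small_bounds h : 0 <= h -> h <= 1/2 -> h / 2 <= 1 - exp (- h).
Proof.
  intros H1 H2. pose proof (exp_ineq1_le h). pose proof (exp_mul_exp_neg h).
  pose proof (exp_pos h). pose proof (exp_pos (-h)). nra.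
Qed.

(* One step of V_relax of length h, fed with the envelope exp (- decay_rate s) at the delayed
   times, stays below the envelope propagated by h. *)
Lemma decay_rate_contraction h : 0 < h <= 1/2 ->
  exp (decay_rate * h) * (exp (- h) + (1 - exp (- h)) * ((1 - ps) * exp (decay_rate * tau))) <= 1.
Proof.
  intros Hh. destruct decay_rate_le as [HC1 HC2]. pose proof decay_rate_pos as HC.
  set (C := decay_rate) in *.
  set (rho := (1 - ps) * exp (C * tau)).
  assert (Hrho : rho <= 1 - ps / 2).
  { pose proof (exp_ineq1_le (- (C * tau))). pose proof (exp_mul_exp_neg (C * tau)).
    pose proof (exp_pos (C * tau)). pose proof (exp_pos (- (C * tau))).
    assert (Hr : rho * exp (- (C * tau)) = 1 - ps) by (unfold rho; rewrite Rmult_assoc, H0; ring).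
    assert (0 <= rho) by (unfold rho; apply Rmult_le_pos; lra).
    assert (rho * (1 - ps / 8) <= 1 - ps) by nra.
    nra. }
  pose proof (exp_neg_small_bounds h ltac:(lra) ltac:(lra)) as E3.
  pose proof (exp_neg_le_1 h ltac:(lra)) as E1.
  set (E := exp (- h)) in *. set (Q := exp (C * h)).
  assert (HQ : Q * (1 - C * h) <= 1).
  { pose proof (exp_ineq1_le (- (C * h))). pose proof (exp_mul_exp_neg (C * h)).
    apply Rle_trans with (Q * exp (- (C * h))); [apply Rmult_le_compat_l; [apply Rlt_le, exp_pos|lra] | unfold Q; lra]. }
  assert (HQp : 0 < Q) by apply exp_pos.
  assert (E + (1 - E) * rho <= 1 - h * ps / 4) by nra.
  assert (1 - h * ps / 4 <= 1 - C * h) by nra.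
  nra.
Qed.

Definition exp_envelope A s := A * exp (- decay_rate * s).

Lemma exp_envelope_noninc A r s : 0 <= A -> r <= s -> exp_envelope A s <= exp_envelope A r.
Proof.
  intros HA Hrs. pose proof decay_rate_pos. unfold exp_envelope. apply Rmult_le_compat_l; [lra|].
  destruct (Req_dec r s) as [->|]; [lra|]. left; apply exp_increasing. nra.
Qed.

Lemma exp_envelope_past A s : 0 <= A -> s <= 0 -> A <= exp_envelope A s.
Proof.
  intros HA Hs. pose proof decay_rate_pos. unfold exp_envelope.
  pose proof (exp_ineq1_le (- decay_rate * s)). assert (0 <= - decay_rate * s) by nra. nra.
Qed.

Lemma exp_envelope_back A T k : exp_envelope A (T - k) = exp_envelope A T * exp (decay_rate * k).
Proof. unfold exp_envelope. rewrite Rmult_assoc, <- exp_plus. f_equal. f_equal. ring. Qed.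

Lemma exp_envelope_cont A s : continuity_pt (exp_envelope A) s.
Proof.
  unfold exp_envelope. apply continuity_pt_mult; [apply continuity_pt_const; intros ? ?; auto|].
  apply (continuity_pt_comp (fun s => - decay_rate * s) exp).
  - apply continuity_pt_mult; [apply continuity_pt_const; intros ? ?; auto| apply continuity_pt_id].
  - apply derivable_continuous_pt, derivable_pt_exp.
Qed.

(* The first time T at which V would touch the envelope, one step of V_relax of length h
   starting at T - h contradicts decay_rate_contraction. *)
Lemma relaxation_below_exp D ep : 0 < ep -> (forall s, -tau <= s <= 0 -> V s <= D) ->
  forall t, 0 <= t -> V t <= exp_envelope (D + ep) t.
Proof.
  intros Hep HD t Ht.
  assert (HD0 : 0 <= D) by (pose proof (HD 0 ltac:(lra)); pose proof (V_nonneg 0); lra).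
  set (g := exp_envelope (D + ep)).
  destruct (Rlt_le_dec (V t) (g t)) as [|Hge]; [lra|]. exfalso.
  destruct (first_zero_crossing (fun s => V s - g s) t) as [T [HT [HTe HTl]]]; simpl in *; try lra.
  - intro s. apply continuity_pt_minus; auto. apply exp_envelope_cont.
  - pose proof (HD 0 ltac:(lra)). pose proof (exp_envelope_past (D + ep) 0 ltac:(lra) ltac:(lra)) as Hg0.
    fold g in Hg0. lra.
  - set (h := Rmin T (1/2) / 2).
    assert (Hh : 0 < h) by (unfold h; pose proof (Rmin_glb_lt T (1/2) 0 HT ltac:(lra)); lra).
    assert (Hh1 : h < T) by (unfold h; pose proof (Rmin_l T (1/2)); lra).
    assert (Hh2 : h <= 1/2) by (unfold h; pose proof (Rmin_r T (1/2)); lra).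
    assert (K1 : V T <= exp (- h) * V (T - h) + (1 - exp (- h)) * ((1 - ps) * g (T - h - tau))).
    { replace T with ((T - h) + h) at 1 by ring. apply V_relax; try lra.
      intros s Hs. apply Rmult_le_compat_l; [lra|].
      destruct (Rle_lt_dec (s - tau) 0) as [Hc|Hc].
      - pose proof (HD (s - tau) ltac:(lra)).
        pose proof (exp_envelope_past (D + ep) (T - h - tau) ltac:(lra) ltac:(lra)) as Hgp. fold g in Hgp. lra.
      - apply Rle_trans with (g (s - tau)); [|apply exp_envelope_noninc; lra].
        destruct (Rlt_le_dec (s - tau) T) as [Hc2|Hc2].
        + pose proof (HTl (s - tau) ltac:(lra)). lra.
        + replace (s - tau) with T by lra. lra. }
    pose proof (HTl (T - h) ltac:(lra)) as K2.
    unfold g in *. set (G0 := exp_envelope (D + ep) T).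
    assert (HG0 : 0 < G0) by (unfold G0, exp_envelope; pose proof (exp_pos (- decay_rate * T)); nra).
    rewrite (exp_envelope_back _ T h) in K2. fold G0 in K2.
    replace (T - h - tau) with (T - (h + tau)) in K1 by ring.
    rewrite (exp_envelope_back _ T (h + tau)), Rmult_plus_distr_l, exp_plus in K1. fold G0 in K1.
    pose proof (decay_rate_contraction h ltac:(lra)) as Hcontr.
    assert (exp (- h) * V (T - h) < exp (- h) * (G0 * exp (decay_rate * h)))
      by (apply Rmult_lt_compat_l; [apply exp_pos | lra]).
    pose proof (exp_neg_le_1 h ltac:(lra)). pose proof (exp_pos (decay_rate * h)).
    assert (HVT : V T = G0) by (unfold G0; lra).
    nra.
Qed.

Lemma delayed_relaxation_decay D : (forall s, -tau <= s <= 0 -> V s <= D) ->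
  forall t, 0 <= t -> V t <= D * exp (- decay_rate * t).
Proof.
  intros HD t Ht. apply Rle_plus_epsilon; intros ep Hep.
  pose proof (relaxation_below_exp D ep Hep HD t Ht) as Hb. unfold exp_envelope in Hb.
  pose proof (exp_pos (- decay_rate * t)).
  assert (exp (- decay_rate * t) <= 1).
  { replace (- decay_rate * t) with (- (decay_rate * t)) by ring.
    apply exp_neg_le_1. pose proof decay_rate_pos. nra. }
  nra.
Qed.

End RelaxationDecay.

(** * Euclidean vectors *)

Definition vdot {d} (x y : Vec d) : R := sum_fin d (fun i => x i * y i).

Lemma sum_fin_ext d (f g : Fin.t d -> R) : (forall i, f i = g i) -> sum_fin d f = sum_fin d g.
Proof. induction d; simpl; intros H; auto. rewrite H, (IHd (fun i => f (Fin.FS i)) (fun i => g (Fin.FS i))); auto. Qed.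

Lemma sum_fin_lin d (f g : Fin.t d -> R) a b :
  sum_fin d (fun i => a * f i + b * g i) = a * sum_fin d f + b * sum_fin d g.
Proof. induction d; simpl; [ring|]. rewrite (IHd (fun i => f (Fin.FS i)) (fun i => g (Fin.FS i))). ring. Qed.

Lemma sum_fin_nonneg d (f : Fin.t d -> R) : (forall i, 0 <= f i) -> 0 <= sum_fin d f.
Proof. induction d; simpl; intros H; [lra|]. pose proof (H Fin.F1). pose proof (IHd (fun i => f (Fin.FS i)) (fun i => H _)). lra. Qed.

Lemma sum_fin_term d (f : Fin.t d -> R) i : (forall j, 0 <= f j) -> f i <= sum_fin d f.
Proof.
  revert f. induction i as [n|n i IH]; intros f H; simpl.
  - pose proof (sum_fin_nonneg n (fun j => f (Fin.FS j)) (fun j => H _)). lra.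
  - pose proof (H Fin.F1). pose proof (IH (fun j => f (Fin.FS j)) (fun j => H _)). lra.
Qed.

Lemma sum_fin_scal n (f : Fin.t n -> R) a : sum_fin n (fun i => a * f i) = a * sum_fin n f.
Proof.
  rewrite (sum_fin_ext n (fun i => a * f i) (fun i => a * f i + 0 * f i)) by (intro; ring).
  rewrite sum_fin_lin. ring.
Qed.

Lemma sum_fin_zero n : sum_fin n (fun _ => 0) = 0.
Proof. induction n; simpl; auto. rewrite IHn. ring. Qed.

Lemma vdot_comm {d} (x y : Vec d) : vdot x y = vdot y x.
Proof. unfold vdot. apply sum_fin_ext. intro; ring. Qed.

Lemma vdot_sub_l {d} (x y z : Vec d) : vdot (vsub x y) z = vdot x z - vdot y z.
Proof. unfold vdot. rewrite (sum_fin_ext _ _ (fun i => 1 * (x i * z i) + (-1) * (y i * z i))) by (intro; unfold vsub; ring).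
  rewrite sum_fin_lin. ring. Qed.

Lemma vdot_scale_l {d} (x z : Vec d) a : vdot (vscale a x) z = a * vdot x z.
Proof. unfold vdot. rewrite (sum_fin_ext _ _ (fun i => a * (x i * z i) + 0 * (x i * z i))) by (intro; unfold vscale; ring).
  rewrite sum_fin_lin. ring. Qed.

Lemma vdot_self_nonneg {d} (x : Vec d) : 0 <= vdot x x.
Proof. apply sum_fin_nonneg. intro; nra. Qed.

Lemma vnorm_nonneg {d} (x : Vec d) : 0 <= vnorm x.
Proof. apply sqrt_pos. Qed.

Lemma vnorm_sqr {d} (x : Vec d) : vnorm x * vnorm x = vdot x x.
Proof. unfold vnorm. apply sqrt_sqrt. apply vdot_self_nonneg. Qed.

Lemma vdot_expand {d} (x y : Vec d) l :
  vdot (fun i => x i - l * y i) (fun i => x i - l * y i) = vdot x x - 2 * l * vdot x y + l * l * vdot y y.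
Proof. unfold vdot.
  rewrite (sum_fin_ext _ _ (fun i => 1 * (x i * x i) + 1 * ((-2*l) * (x i * y i) + (l*l) * (y i * y i)))) by (intro; ring).
  rewrite sum_fin_lin. rewrite (sum_fin_lin d (fun i => x i * y i) (fun i => y i * y i)). ring. Qed.

Lemma cauchy_schwarz {d} (x y : Vec d) : vdot x y <= vnorm x * vnorm y.
Proof.
  pose proof (vnorm_sqr x) as Hx. pose proof (vnorm_sqr y) as Hy.
  pose proof (vnorm_nonneg x). pose proof (vnorm_nonneg y).
  assert (Q : forall l, 0 <= vdot x x - 2 * l * vdot x y + l * l * vdot y y).
  { intro l. rewrite <- vdot_expand. apply vdot_self_nonneg. }
  destruct (Req_dec (vnorm y) 0) as [Hb|Hb].
  - rewrite Hb in Hy. rewrite Hb, Rmult_0_r.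
    destruct (Rle_lt_dec (vdot x y) 0); auto. exfalso.
    pose proof (Q ((vdot x x + 1) / (2 * vdot x y))).
    replace (2 * ((vdot x x + 1) / (2 * vdot x y)) * vdot x y) with (vdot x x + 1) in H1 by (field; lra).
    rewrite <- Hy in H1. nra.
  - pose proof (Q (vdot x y / vdot y y)).
    assert (0 < vdot y y) by (rewrite <- Hy; nra).
    assert (vdot x y * vdot x y <= vdot x x * vdot y y).
    { replace (vdot x x - 2 * (vdot x y / vdot y y) * vdot x y + vdot x y / vdot y y * (vdot x y / vdot y y) * vdot y y)
        with ((vdot x x * vdot y y - vdot x y * vdot x y) / vdot y y) in H1 by (field; lra).
      apply Rmult_le_compat_r with (r := vdot y y) in H1; [|lra].
      unfold Rdiv in H1. rewrite Rmult_assoc, Rinv_l in H1; lra. }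
    rewrite <- Hx, <- Hy in H3.
    destruct (Rle_lt_dec (vdot x y) 0); [nra|].
    apply Rsqr_incr_0_var; [unfold Rsqr; nra | apply Rmult_le_pos; auto].
Qed.

Lemma Rabs_vdot_le {d} (x y : Vec d) : Rabs (vdot x y) <= vnorm x * vnorm y.
Proof.
  apply Rabs_le. split; [|apply cauchy_schwarz].
  pose proof (cauchy_schwarz (vscale (-1) x) y). rewrite vdot_scale_l in H.
  assert (vnorm (vscale (-1) x) = vnorm x).
  { unfold vnorm. f_equal. apply sum_fin_ext. intro; unfold vscale; ring. }
  rewrite H0 in H. lra.
Qed.

Definition vadd {d} (x y : Vec d) : Vec d := fun i => x i + y i.

Lemma vnorm_add_le {d} (x y : Vec d) : vnorm (vadd x y) <= vnorm x + vnorm y.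
Proof.
  pose proof (vnorm_nonneg x). pose proof (vnorm_nonneg y).
  assert (E : vdot (vadd x y) (vadd x y) = vdot x x + 2 * vdot x y + vdot y y).
  { unfold vdot, vadd.
    rewrite (sum_fin_ext _ _ (fun i => 1 * (x i * x i) + 1 * (2 * (x i * y i) + 1 * (y i * y i)))) by (intro; ring).
    rewrite sum_fin_lin. rewrite (sum_fin_lin d (fun i => x i * y i) (fun i => y i * y i)). ring. }
  apply Rsqr_incr_0_var; [|lra]. unfold Rsqr.
  pose proof (vnorm_sqr (vadd x y)). pose proof (vnorm_sqr x). pose proof (vnorm_sqr y).
  pose proof (cauchy_schwarz x y). nra.
Qed.

Lemma vnorm_ext {d} (x y : Vec d) : (forall i, x i = y i) -> vnorm x = vnorm y.
Proof. intro H. unfold vnorm. f_equal. apply sum_fin_ext. intro; rewrite H; auto. Qed.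

Lemma vnorm_sub_triang {d} (x y z : Vec d) : vnorm (vsub x z) <= vnorm (vsub x y) + vnorm (vsub y z).
Proof.
  rewrite (vnorm_ext (vsub x z) (vadd (vsub x y) (vsub y z))) by (intro; unfold vsub, vadd; ring).
  apply vnorm_add_le.
Qed.

Lemma vnorm_sub_sym {d} (x y : Vec d) : vnorm (vsub x y) = vnorm (vsub y x).
Proof.
  unfold vnorm. f_equal. apply sum_fin_ext. intro; unfold vsub; ring.
Qed.

Lemma vnorm_scale {d} a (x : Vec d) : vnorm (vscale a x) = Rabs a * vnorm x.
Proof.
  unfold vnorm. rewrite <- (sqrt_Rsqr (Rabs a)) by apply Rabs_pos. rewrite <- sqrt_mult_alt.
  - f_equal. rewrite <- Rsqr_abs. unfold Rsqr.
    rewrite (sum_fin_ext _ _ (fun i => (a*a) * (x i * x i) + 0 * (x i * x i))) by (intro; unfold vscale; ring).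
    rewrite sum_fin_lin. ring.
  - apply Rle_0_sqr.
Qed.

Lemma Rabs_coord_le_vnorm {d} (x : Vec d) i : Rabs (x i) <= vnorm x.
Proof.
  unfold vnorm. rewrite <- sqrt_Rsqr_abs. apply sqrt_le_1_alt. unfold Rsqr.
  apply (sum_fin_term d (fun j => x j * x j)). intro; nra.
Qed.

Lemma vnorm_zero {d} (x : Vec d) : (forall i, x i = 0) -> vnorm x = 0.
Proof. intro H. unfold vnorm. rewrite <- sqrt_0. f_equal.
  rewrite (sum_fin_ext d _ (fun i => 0 * 0 + 0 * 0)) by (intro; rewrite H; ring).
  rewrite (sum_fin_lin d (fun _ => 0) (fun _ => 0) 0 0). ring. Qed.

Lemma vnorm_sub_diag {d} (x : Vec d) : vnorm (vsub x x) = 0.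
Proof. apply vnorm_zero. intro; unfold vsub; ring. Qed.

Lemma vnorm_sub_zero {d} (x : Vec d) : vnorm (vsub x (fun _ => 0)) = vnorm x.
Proof. apply vnorm_ext; intro; unfold vsub; ring. Qed.

Lemma vnorm_sub_le_add {d} (x y : Vec d) : vnorm (vsub x y) <= vnorm x + vnorm y.
Proof.
  pose proof (vnorm_sub_triang x (fun _ => 0) y). rewrite vnorm_sub_zero in H.
  rewrite (vnorm_sub_sym (fun _ => 0) y), vnorm_sub_zero in H. exact H.
Qed.

Lemma vnorm_le_add_sub {d} (x y : Vec d) : vnorm x <= vnorm y + vnorm (vsub x y).
Proof.
  pose proof (vnorm_sub_triang x y (fun _ => 0)). rewrite !vnorm_sub_zero in H. lra.
Qed.

Lemma Rabs_vnorm_sub_le {d} (x y : Vec d) : Rabs (vnorm x - vnorm y) <= vnorm (vsub x y).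
Proof.
  pose proof (vnorm_le_add_sub x y). pose proof (vnorm_le_add_sub y x).
  rewrite (vnorm_sub_sym y x) in H0. apply Rabs_le. lra.
Qed.

Lemma vnorm_dim0 (x : Vec 0) : vnorm x = 0.
Proof. unfold vnorm. simpl. apply sqrt_0. Qed.

Lemma unit_vector_exists (n : nat) : (0 < n)%nat -> exists e : Vec n, vnorm e = 1.
Proof.
  intro Hn. destruct n as [|n]; [lia|].
  exists (fun i => Fin.caseS' i (fun _ => R) 1 (fun _ => 0)).
  unfold vnorm. simpl. rewrite (sum_fin_ext n _ (fun _ => 0)) by (intro; simpl; ring).
  rewrite sum_fin_zero. replace (1 * 1 + 0) with 1 by ring. apply sqrt_1.
Qed.

Lemma vnorm_le_of_unit_vdot {d} (w : Vec d) c : 0 <= c ->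
  (forall e : Vec d, vnorm e = 1 -> vdot w e <= c) -> vnorm w <= c.
Proof.
  intros Hc H. destruct (Req_dec (vnorm w) 0) as [Hz|Hz]; [lra|].
  pose proof (vnorm_nonneg w).
  set (e := vscale (/ vnorm w) w).
  assert (He : vnorm e = 1).
  { unfold e. rewrite vnorm_scale, Rabs_right; [field; lra|]. left; apply Rinv_0_lt_compat; lra. }
  specialize (H e He). unfold e in H. rewrite vdot_comm, vdot_scale_l, <- vnorm_sqr in H.
  replace (/ vnorm w * (vnorm w * vnorm w)) with (vnorm w) in H by (field; lra). auto.
Qed.

Lemma vdot_unit_le_vnorm {d} (w e : Vec d) : vnorm e = 1 -> vdot w e <= vnorm w.
Proof. intro He. pose proof (cauchy_schwarz w e). rewrite He in H. lra. Qed.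

(** * Sequential compactness *)

Definition vseq_cv {d} (w : nat -> Vec d) (l : Vec d) :=
  forall e, 0 < e -> exists N, forall n, (N <= n)%nat -> vnorm (vsub (w n) l) < e.

Lemma subsequence_choice (P : nat -> nat -> Prop) : (forall N k, exists p, (N <= p)%nat /\ P k p) ->
  exists phi : nat -> nat, (forall n, phi n < phi (S n))%nat /\ forall n, P n (phi n).
Proof.
  intros H.
  set (f := fun N k => proj1_sig (constructive_indefinite_description _ (H N k))).
  assert (Hf : forall N k, (N <= f N k)%nat /\ P k (f N k)).
  { intros N k. unfold f. destruct (constructive_indefinite_description _ (H N k)); simpl; auto. }
  exists (fix phi n := match n with O => f O O | S m => f (S (phi m)) (S m) end).
  split.
  - intro n. simpl. destruct (Hf (S ((fix phi n := match n with O => f O O | S m => f (S (phi m)) (S m) end) n)) (S n)). lia.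
  - intro n. destruct n; simpl; apply Hf.
Qed.

Lemma strict_incr_ge_id (phi : nat -> nat) : (forall n, phi n < phi (S n))%nat -> forall n, (n <= phi n)%nat.
Proof. intros H n. induction n; [lia|]. specialize (H n). lia. Qed.

Lemma strict_incr_monotone (phi : nat -> nat) : (forall n, phi n < phi (S n))%nat -> forall n m, (n <= m)%nat -> (phi n <= phi m)%nat.
Proof. intros H n m Hnm. induction Hnm; [lia|]. specialize (H m). lia. Qed.

Lemma bolzano_weierstrass_R (u : nat -> R) M : (forall n, Rabs (u n) <= M) ->
  exists phi : nat -> nat, (forall n, phi n < phi (S n))%nat /\ exists l, Un_cv (fun n => u (phi n)) l.
Proof.
  intros HM.
  destruct (Bolzano_Weierstrass u (fun c => -M <= c <= M) (compact_P3 (-M) M)) as [l Hl].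
  { intro n. apply Rabs_le_between, HM. }
  destruct (subsequence_choice (fun k p => Rabs (u p - l) < / INR (S k))) as [phi [Hphi Hp]].
  { intros N k. assert (Hk : 0 < / INR (S k)) by (apply Rinv_0_lt_compat, lt_0_INR; lia).
    destruct (Hl (disc l (mkposreal _ Hk)) N) as [p [Hp1 Hp2]].
    - exists (mkposreal _ Hk). intros y Hy; exact Hy.
    - exists p; split; auto. }
  exists phi; split; auto. exists l. intros e He.
  destruct (archimed_cor1 e He) as [N [HN HN0]]. exists N. intros n Hn.
  eapply Rlt_trans; [apply Hp|]. eapply Rle_lt_trans; [|exact HN].
  apply Rinv_le_contravar; [apply lt_0_INR; lia|]. apply le_INR. lia.
Qed.

Lemma vnorm_cons_le {d} (z : Vec (S d)) : vnorm z <= Rabs (z Fin.F1) + vnorm (fun j => z (Fin.FS j)).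
Proof.
  unfold vnorm at 1. simpl.
  pose proof (vnorm_nonneg (fun j => z (Fin.FS j))) as H0.
  pose proof (vnorm_sqr (fun j => z (Fin.FS j))) as H1. unfold vdot in H1.
  apply Rsqr_incr_0_var; [|pose proof (Rabs_pos (z Fin.F1)); lra].
  rewrite Rsqr_sqrt.
  - unfold Rsqr. rewrite <- H1. pose proof (Rabs_pos (z Fin.F1)).
    assert (Rabs (z Fin.F1) * Rabs (z Fin.F1) = z Fin.F1 * z Fin.F1) by (rewrite <- Rabs_mult; apply Rabs_right; nra).
    nra.
  - pose proof (sum_fin_nonneg d (fun i => z (Fin.FS i) * z (Fin.FS i)) (fun i => ltac:(nra))). nra.
Qed.

Lemma vnorm_tail_le {d} (z : Vec (S d)) : vnorm (fun j => z (Fin.FS j)) <= vnorm z.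
Proof.
  unfold vnorm. apply sqrt_le_1_alt. simpl. nra.
Qed.

Lemma bolzano_weierstrass_Vec d : forall (u : nat -> Vec d) M, (forall n, vnorm (u n) <= M) ->
  exists phi : nat -> nat, (forall n, phi n < phi (S n))%nat /\ exists l, vseq_cv (fun n => u (phi n)) l.
Proof.
  induction d as [|d IH]; intros u M HM.
  - exists S. split; [intros; lia|]. exists (u O). intros e He. exists O. intros n _.
    unfold vnorm. simpl. rewrite sqrt_0. lra.
  - destruct (bolzano_weierstrass_R (fun n => u n Fin.F1) M) as [phi1 [Hphi1 [l1 Hl1]]].
    { intro n. eapply Rle_trans; [apply Rabs_coord_le_vnorm|apply HM]. }
    destruct (IH (fun n j => u (phi1 n) (Fin.FS j)) M) as [phi2 [Hphi2 [l2 Hl2]]].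
    { intro n. eapply Rle_trans; [apply vnorm_tail_le|apply HM]. }
    exists (fun n => phi1 (phi2 n)). split.
    { intro n. pose proof (Hphi2 n). pose proof (strict_incr_monotone phi1 Hphi1 (S (phi2 n)) (phi2 (S n)) ltac:(lia)).
      specialize (Hphi1 (phi2 n)). lia. }
    exists (fun i => Fin.caseS' i (fun _ => R) l1 (fun j => l2 j)).
    intros e He. destruct (Hl1 (e/2) ltac:(lra)) as [N1 HN1]. destruct (Hl2 (e/2) ltac:(lra)) as [N2 HN2].
    exists (max N1 N2). intros n Hn.
    eapply Rle_lt_trans; [apply vnorm_cons_le|]. simpl.
    pose proof (HN1 (phi2 n) ltac:(pose proof (strict_incr_ge_id phi2 Hphi2 n); lia)).
    pose proof (HN2 n ltac:(lia)). unfold vsub, R_dist in *. simpl in *. lra.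
Qed.

Lemma closure_seq_closed {d} (Om : Vec d -> Prop) (w : nat -> Vec d) l :
  (forall n, closure Om (w n)) -> vseq_cv w l -> closure Om l.
Proof.
  intros Hw Hc e He. destruct (Hc (e/2) ltac:(lra)) as [N HN].
  destruct (Hw N (e/2) ltac:(lra)) as [y [Hy Hy2]]. exists y; split; auto.
  pose proof (HN N (le_n _)). pose proof (vnorm_sub_triang y (w N) l). lra.
Qed.

Lemma closure_incl {d} {Om : Vec d -> Prop} {x} : Om x -> closure Om x.
Proof. intros H e He. exists x; split; auto. rewrite vnorm_sub_diag; auto. Qed.

Lemma closure_bounded {d} (Om : Vec d -> Prop) : is_bounded Om -> exists M, forall x, closure Om x -> vnorm x <= M.
Proof.
  intros [B HB]. exists (B + 1). intros x Hx. destruct (Hx 1 ltac:(lra)) as [y [Hy Hy2]].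
  pose proof (HB y Hy). rewrite vnorm_sub_sym in Hy2.
  pose proof (vnorm_le_add_sub x y). lra.
Qed.

Lemma closure_seq_compact {d} (Om : Vec d -> Prop) : is_bounded Om ->
  forall u : nat -> Vec d, (forall n, closure Om (u n)) ->
  exists phi : nat -> nat, (forall n, n <= phi n)%nat /\ exists l, closure Om l /\ vseq_cv (fun n => u (phi n)) l.
Proof.
  intros HB u Hu. destruct (closure_bounded Om HB) as [M HM].
  destruct (bolzano_weierstrass_Vec d u M (fun n => HM _ (Hu n))) as [phi [Hphi [l Hl]]].
  exists phi; split; [apply strict_incr_ge_id; auto|]. exists l; split; auto.
  apply (closure_seq_closed Om (fun n => u (phi n))); auto.
Qed.

Lemma segment_seq_compact (a b : R) : forall u : nat -> R, (forall n, a <= u n <= b) ->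
  exists phi : nat -> nat, (forall n, n <= phi n)%nat /\ exists l, a <= l <= b /\ Un_cv (fun n => u (phi n)) l.
Proof.
  intros u Hu. destruct (bolzano_weierstrass_R u (Rabs a + Rabs b)) as [phi [Hphi [l Hl]]].
  { intro n. destruct (Hu n). apply Rabs_le. split; pose proof (Rabs_pos a); pose proof (Rabs_pos b);
     pose proof (Rle_abs b); pose proof (Rle_abs (-a)); rewrite Rabs_Ropp in *; lra. }
  exists phi; split; [apply strict_incr_ge_id; auto|]. exists l; split; auto.
  split.
  - apply Rnot_lt_le; intro Hc. destruct (Hl (a - l) ltac:(lra)) as [N HN]. specialize (HN N (le_n _)). unfold R_dist in HN.
    destruct (Hu (phi N)). apply Rabs_def2 in HN. lra.
  - apply Rnot_lt_le; intro Hc. destruct (Hl (l - b) ltac:(lra)) as [N HN]. specialize (HN N (le_n _)). unfold R_dist in HN.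
    destruct (Hu (phi N)). apply Rabs_def2 in HN. lra.
Qed.

Lemma inv_INR_S_small (dl : R) : 0 < dl -> exists N, forall n, (N <= n)%nat -> / (INR n + 1) < dl.
Proof.
  intros Hd. destruct (archimed_cor1 dl Hd) as [N [HN HN0]]. exists N. intros n Hn.
  eapply Rle_lt_trans; [|exact HN]. apply Rinv_le_contravar; [apply lt_0_INR; lia|].
  apply Rle_trans with (INR n); [apply le_INR; auto|lra].
Qed.

Lemma INR_unbounded (M : R) : exists N, forall n, (N <= n)%nat -> M < INR n.
Proof.
  destruct (archimed M) as [H1 _]. exists (Z.to_nat (up M)). intros n Hn.
  apply Rlt_le_trans with (IZR (up M)); auto.
  destruct (Z_lt_le_dec (up M) 0).
  - apply Rle_trans with 0; [apply IZR_le; lia| apply pos_INR].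
  - rewrite <- (Z2Nat.id (up M)) by lia. rewrite <- INR_IZR_INZ. apply le_INR; lia.
Qed.

Lemma inv_INR_S_pos n : 0 < / (INR n + 1).
Proof. apply Rinv_0_lt_compat. pose proof (pos_INR n); lra. Qed.

Lemma inv_INR_S_le n m : (n <= m)%nat -> / (INR m + 1) <= / (INR n + 1).
Proof. intro H. apply Rinv_le_contravar; [pose proof (pos_INR n); lra|]. apply le_INR in H. lra. Qed.

(** * Continuity on a set and the averaging functional *)

Section ContinuityOn.
Variables (d : nat) (K : Vec d -> Prop).

Lemma cont_on_const c : cont_on K (fun _ => c).
Proof. intros x Hx e He. exists 1; split; [lra|]. intros. rewrite Rminus_diag, Rabs_R0; auto. Qed.

Lemma cont_on_lin f g a : cont_on K f -> cont_on K g -> cont_on K (fun y => a * f y + g y).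
Proof.
  intros Hf Hg x Hx e He.
  destruct (Hf x Hx (e / 2 / (Rabs a + 1))) as [d1 [Hd1 H1]].
  { apply Rdiv_lt_0_compat; [lra|]. pose proof (Rabs_pos a); lra. }
  destruct (Hg x Hx (e / 2)) as [d2 [Hd2 H2]]; [lra|].
  exists (Rmin d1 d2); split; [apply Rmin_glb_lt; auto|].
  intros y Hy Hyx.
  specialize (H1 y Hy (Rlt_le_trans _ _ _ Hyx (Rmin_l _ _))).
  specialize (H2 y Hy (Rlt_le_trans _ _ _ Hyx (Rmin_r _ _))).
  replace (a * f y + g y - (a * f x + g x)) with (a * (f y - f x) + (g y - g x)) by ring.
  eapply Rle_lt_trans; [apply Rabs_triang|]. rewrite Rabs_mult.
  assert (Rabs a * Rabs (f y - f x) <= (Rabs a + 1) * (e / 2 / (Rabs a + 1))).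
  { apply Rmult_le_compat; try apply Rabs_pos; lra. }
  replace ((Rabs a + 1) * (e / 2 / (Rabs a + 1))) with (e / 2) in H by (field; pose proof (Rabs_pos a); lra).
  lra.
Qed.

Lemma cont_on_plus f g : cont_on K f -> cont_on K g -> cont_on K (fun y => f y + g y).
Proof. intros. pose proof (cont_on_lin f g 1 H H0). intros x Hx e He. destruct (H1 x Hx e He) as [dd [Hdd H2]].
  exists dd; split; auto. intros y Hy Hyx. specialize (H2 y Hy Hyx). rewrite !Rmult_1_l in H2. auto. Qed.

Lemma cont_on_scal f a : cont_on K f -> cont_on K (fun y => a * f y).
Proof. intros. pose proof (cont_on_lin f _ a H (cont_on_const 0)). intros x Hx e He. destruct (H0 x Hx e He) as [dd [Hdd H2]].
  exists dd; split; auto. intros y Hy Hyx. specialize (H2 y Hy Hyx). rewrite !Rplus_0_r in H2. auto. Qed.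

Lemma cont_on_minus f g : cont_on K f -> cont_on K g -> cont_on K (fun y => f y - g y).
Proof. intros. pose proof (cont_on_lin g f (-1) H0 H). intros x Hx e He. destruct (H1 x Hx e He) as [dd [Hdd H2]].
  exists dd; split; auto. intros y Hy Hyx. specialize (H2 y Hy Hyx).
  replace (f y - g y - (f x - g x)) with (-1 * g y + f y - (-1 * g x + f x)) by ring. auto. Qed.

Lemma cont_on_opp f : cont_on K f -> cont_on K (fun y => - f y).
Proof.
  intros Hf x Hx e He. destruct (Hf x Hx e He) as [dl [Hdl H]]. exists dl; split; auto.
  intros y Hy Hyx. replace (- f y - - f x) with (- (f y - f x)) by ring. rewrite Rabs_Ropp. auto.
Qed.

Lemma cont_on_mult f g : cont_on K f -> cont_on K g -> cont_on K (fun y => f y * g y).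
Proof.
  intros Hf Hg x Hx e He.
  set (A := Rabs (f x) + Rabs (g x) + 1).
  assert (HA : 0 < A) by (unfold A; pose proof (Rabs_pos (f x)); pose proof (Rabs_pos (g x)); lra).
  set (e' := Rmin 1 (e / (4 * A))).
  assert (He' : 0 < e') by (unfold e'; apply Rmin_glb_lt; [lra|apply Rdiv_lt_0_compat; lra]).
  assert (He'1 : e' <= 1) by apply Rmin_l.
  assert (He'2 : e' <= e / (4 * A)) by apply Rmin_r.
  destruct (Hf x Hx e' He') as [d1 [Hd1 H1]]. destruct (Hg x Hx e' He') as [d2 [Hd2 H2]].
  exists (Rmin d1 d2); split; [apply Rmin_glb_lt; auto|].
  intros y Hy Hyx.
  specialize (H1 y Hy (Rlt_le_trans _ _ _ Hyx (Rmin_l _ _))).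
  specialize (H2 y Hy (Rlt_le_trans _ _ _ Hyx (Rmin_r _ _))).
  replace (f y * g y - f x * g x) with ((f y - f x) * (g y - g x) + f x * (g y - g x) + g x * (f y - f x)) by ring.
  eapply Rle_lt_trans; [apply Rabs_triang|]. eapply Rle_lt_trans; [apply Rplus_le_compat_r, Rabs_triang|].
  rewrite !Rabs_mult.
  pose proof (Rabs_pos (f y - f x)). pose proof (Rabs_pos (g y - g x)).
  pose proof (Rabs_pos (f x)). pose proof (Rabs_pos (g x)).
  assert (Rabs (f y - f x) * Rabs (g y - g x) <= e' * 1) by (apply Rmult_le_compat; lra).
  assert (Rabs (f x) * Rabs (g y - g x) <= A * e') by (apply Rmult_le_compat; unfold A; lra).
  assert (Rabs (g x) * Rabs (f y - f x) <= A * e') by (apply Rmult_le_compat; unfold A; lra).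
  assert (A * e' <= e / 4).
  { apply Rle_trans with (A * (e / (4 * A))); [apply Rmult_le_compat_l; lra|]. right; field; lra. }
  assert (e' <= e / 4).
  { apply Rle_trans with (e / (4 * A)); auto. apply Rmult_le_compat_l; [lra|]. apply Rinv_le_contravar; unfold A in *; lra. }
  lra.
Qed.

Lemma cont_on_vdot (g : Vec d -> Vec d) e : vcont_on K g -> cont_on K (fun y => vdot (g y) e).
Proof.
  intros Hg x Hx ep Hep.
  destruct (Hg x Hx (ep / (vnorm e + 1))) as [dd [Hdd H]].
  { apply Rdiv_lt_0_compat; [lra|]. pose proof (vnorm_nonneg e); lra. }
  exists dd; split; auto. intros y Hy Hyx. specialize (H y Hy Hyx).
  rewrite <- vdot_sub_l. eapply Rle_lt_trans; [apply Rabs_vdot_le|].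
  pose proof (vnorm_nonneg e). pose proof (vnorm_nonneg (vsub (g y) (g x))).
  apply Rle_lt_trans with ((ep / (vnorm e + 1)) * vnorm e).
  - apply Rmult_le_compat_r; lra.
  - apply Rlt_le_trans with ((ep / (vnorm e + 1)) * (vnorm e + 1)).
    + apply Rmult_lt_compat_l; [apply Rdiv_lt_0_compat|]; lra.
    + right; field; lra.
Qed.

Lemma cont_on_coord (g : Vec d -> Vec d) i : vcont_on K g -> cont_on K (fun y => g y i).
Proof.
  intros Hg x Hx ep Hep. destruct (Hg x Hx ep Hep) as [dd [Hdd H]]. exists dd; split; auto.
  intros y Hy Hyx. specialize (H y Hy Hyx). eapply Rle_lt_trans; [|exact H].
  apply (Rabs_coord_le_vnorm (vsub (g y) (g x)) i).
Qed.

Lemma cont_on_comp_sub (psi : Vec d -> R) (c : Vec d) (g : Vec d -> Vec d) :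
  (forall x eps, 0 < eps -> exists delta, 0 < delta /\ forall y, vnorm (vsub y x) < delta -> Rabs (psi y - psi x) < eps) ->
  vcont_on K g -> cont_on K (fun y => psi (vsub c (g y))).
Proof.
  intros Hpsi Hg x Hx ep Hep. destruct (Hpsi (vsub c (g x)) ep Hep) as [d1 [Hd1 H1]].
  destruct (Hg x Hx d1 Hd1) as [d2 [Hd2 H2]]. exists d2; split; auto.
  intros y Hy Hyx. apply H1. specialize (H2 y Hy Hyx). rewrite vnorm_sub_sym.
  erewrite vnorm_ext; [exact H2|]. intro; unfold vsub; ring.
Qed.

Lemma cont_on_sum_fin n (G : Fin.t n -> Vec d -> R) (E : Fin.t n -> R) :
  (forall i, cont_on K (G i)) -> cont_on K (fun y => sum_fin n (fun i => G i y * E i)).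
Proof.
  induction n; intros HG; simpl.
  - apply cont_on_const.
  - apply cont_on_plus; [apply cont_on_mult; [apply HG | apply cont_on_const]|].
    apply (IHn (fun i => G (Fin.FS i)) (fun i => E (Fin.FS i))). intro; apply HG.
Qed.

Lemma cont_on_vnorm (g : Vec d -> Vec d) : vcont_on K g -> cont_on K (fun y => vnorm (g y)).
Proof.
  intros Hg x Hx e He. destruct (Hg x Hx e He) as [dl [Hdl H]]. exists dl; split; auto.
  intros y Hy Hyx. eapply Rle_lt_trans; [apply Rabs_vnorm_sub_le| apply H; auto].
Qed.

Lemma vcont_on_sub (f g : Vec d -> Vec d) : vcont_on K f -> vcont_on K g -> vcont_on K (fun y => vsub (f y) (g y)).
Proof.
  intros Hf Hg x Hx e He. destruct (Hf x Hx (e/2) ltac:(lra)) as [d1 [Hd1 H1]]. destruct (Hg x Hx (e/2) ltac:(lra)) as [d2 [Hd2 H2]].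
  exists (Rmin d1 d2); split; [apply Rmin_glb_lt; auto|]. intros y Hy Hyx.
  specialize (H1 y Hy (Rlt_le_trans _ _ _ Hyx (Rmin_l _ _))). specialize (H2 y Hy (Rlt_le_trans _ _ _ Hyx (Rmin_r _ _))).
  rewrite (vnorm_ext _ (vsub (vsub (f y) (f x)) (vsub (g y) (g x)))) by (intro; unfold vsub; ring).
  eapply Rle_lt_trans; [apply vnorm_sub_le_add|]. lra.
Qed.

Lemma vcont_on_const (c : Vec d) : vcont_on K (fun _ => c).
Proof. intros x Hx e He. exists 1; split; [lra|]. intros. rewrite vnorm_sub_diag; auto. Qed.

End ContinuityOn.

Section AveragingFunctional.
Variables (d : nat) (K : Vec d -> Prop) (I : (Vec d -> R) -> R).
Hypothesis HI : avg_functional K I.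

Lemma avg_lin f g a : cont_on K f -> cont_on K g -> I (fun y => a * f y + g y) = a * I f + I g.
Proof. destruct HI as [H _]. apply H. Qed.

Lemma avg_ext f g : cont_on K f -> (forall y, K y -> f y = g y) -> I f = I g.
Proof. destruct HI as [_ [_ [H _]]]. apply H. Qed.

Lemma avg_one : I (fun _ => 1) = 1.
Proof. destruct HI as [_ [_ [_ H]]]. apply H. Qed.

Lemma avg_nonneg f : cont_on K f -> (forall y, K y -> 0 <= f y) -> 0 <= I f.
Proof. destruct HI as [_ [H _]]. apply H. Qed.

Lemma avg_zero : I (fun _ => 0) = 0.
Proof.
  pose proof (avg_lin (fun _ => 0) (fun _ => 0) 1 (cont_on_const _ K 0) (cont_on_const _ K 0)) as H.
  cbv beta in H.
  rewrite (avg_ext (fun y => 1 * 0 + 0) (fun _ => 0)) in H; [lra| |intros; ring].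
  apply (cont_on_lin _ _ _ _ 1); apply cont_on_const.
Qed.

Lemma avg_scal f a : cont_on K f -> I (fun y => a * f y) = a * I f.
Proof.
  intro Hf. pose proof (avg_lin f (fun _ => 0) a Hf (cont_on_const _ K 0)) as H. cbv beta in H.
  rewrite avg_zero in H.
  rewrite (avg_ext (fun y => a * f y + 0) (fun y => a * f y)) in H; [lra| |intros; ring].
  apply cont_on_lin; auto; apply cont_on_const.
Qed.

Lemma avg_minus f g : cont_on K f -> cont_on K g -> I (fun y => f y - g y) = I f - I g.
Proof.
  intros Hf Hg. pose proof (avg_lin g f (-1) Hg Hf) as H. cbv beta in H.
  rewrite (avg_ext (fun y => -1 * g y + f y) (fun y => f y - g y)) in H; [lra| |intros; ring].
  apply cont_on_lin; auto.
Qed.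

Lemma avg_const c : I (fun _ => c) = c.
Proof.
  pose proof (avg_scal (fun _ => 1) c (cont_on_const _ K 1)) as H. cbv beta in H.
  rewrite avg_one in H.
  rewrite (avg_ext (fun _ => c * 1) (fun _ => c)) in H; [lra| apply cont_on_const|intros; ring].
Qed.

Lemma avg_le f g : cont_on K f -> cont_on K g -> (forall y, K y -> f y <= g y) -> I f <= I g.
Proof.
  intros Hf Hg H.
  pose proof (avg_nonneg (fun y => g y - f y) (cont_on_minus _ _ g f Hg Hf)
                ltac:(intros y Hy; specialize (H y Hy); lra)) as Hn.
  rewrite avg_minus in Hn; auto. lra.
Qed.

Lemma avg_sum_fin n (G : Fin.t n -> Vec d -> R) (E : Fin.t n -> R) :
  (forall i, cont_on K (G i)) ->
  sum_fin n (fun i => I (G i) * E i) = I (fun y => sum_fin n (fun i => G i y * E i)).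
Proof.
  induction n; intros HG; simpl.
  - rewrite avg_zero; auto.
  - rewrite (IHn (fun i => G (Fin.FS i)) (fun i => E (Fin.FS i))) by (intro; apply HG).
    pose proof (cont_on_sum_fin _ K n (fun i => G (Fin.FS i)) (fun i => E (Fin.FS i)) (fun i => HG _)) as Hs.
    pose proof (avg_lin (G Fin.F1) _ (E Fin.F1) (HG _) Hs) as H. cbv beta in H.
    rewrite (avg_ext (fun y => G Fin.F1 y * E Fin.F1 + sum_fin n (fun i => G (Fin.FS i) y * E (Fin.FS i)))
                     (fun y => E Fin.F1 * G Fin.F1 y + sum_fin n (fun i => G (Fin.FS i) y * E (Fin.FS i)))).
    + rewrite H. ring.
    + apply cont_on_plus; [apply cont_on_mult; [apply HG | apply cont_on_const] | exact Hs].
    + intros; ring.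
Qed.

Lemma avg_weight_bounds w ps : cont_on K w -> (forall y, K y -> ps <= w y <= 1) -> ps <= I w <= 1.
Proof.
  intros Hw Hb. split.
  - rewrite <- (avg_const ps). apply avg_le; auto; [apply cont_on_const|]. intros y Hy; apply Hb; auto.
  - rewrite <- avg_one. apply avg_le; auto; [apply cont_on_const|]. intros y Hy; apply Hb; auto.
Qed.

Lemma weighted_avg_le (w f : Vec d -> R) ps c :
  cont_on K w -> cont_on K f -> 0 < ps -> (forall y, K y -> ps <= w y <= 1) ->
  (forall y, K y -> f y <= c) -> I (fun y => w y * f y) / I w <= c.
Proof.
  intros Hw Hf Hps Hwb Hfc. destruct (avg_weight_bounds w ps Hw Hwb) as [Iw _].
  assert (H : I (fun y => w y * f y) <= I (fun y => c * w y)).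
  { apply avg_le; [apply cont_on_mult; auto | apply cont_on_scal; auto |].
    intros y Hy. rewrite (Rmult_comm c). apply Rmult_le_compat_l; [pose proof (Hwb y Hy); lra| auto]. }
  rewrite avg_scal in H; auto.
  apply Rmult_le_reg_r with (I w); [lra|]. unfold Rdiv. rewrite Rmult_assoc, Rinv_l; lra.
Qed.

(* The weights are at least ps, so the weighted average stays a fraction ps of the gap
   M - I f away from the upper bound M. *)
Lemma weighted_avg_gap (w f : Vec d -> R) ps M :
  cont_on K w -> cont_on K f -> 0 < ps -> (forall y, K y -> ps <= w y <= 1) ->
  (forall y, K y -> f y <= M) -> ps * (M - I f) <= M - I (fun y => w y * f y) / I w.
Proof.
  intros Hw Hf Hps Hb Hfm. destruct (avg_weight_bounds w ps Hw Hb) as [Iw Iw'].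
  assert (Hgap : I (fun y => w y * (M - f y)) = M * I w - I (fun y => w y * f y)).
  { rewrite (avg_ext (fun y => w y * (M - f y)) (fun y => M * w y - w y * f y)).
    - rewrite avg_minus, avg_scal; auto. apply cont_on_scal; auto. apply cont_on_mult; auto.
    - apply cont_on_mult; auto. apply cont_on_minus; auto; apply cont_on_const.
    - intros; ring. }
  assert (Hlow : ps * (M - I f) <= I (fun y => w y * (M - f y))).
  { replace (ps * (M - I f)) with (- ps * I f + ps * M) by ring.
    rewrite <- (avg_const (ps * M)), <- avg_lin by (auto; apply cont_on_const).
    apply avg_le.
    - apply cont_on_lin; auto; apply cont_on_const.
    - apply cont_on_mult; auto. apply cont_on_minus; auto; apply cont_on_const.
    - intros y Hy. specialize (Hfm y Hy). specialize (Hb y Hy). nra. }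
  rewrite Hgap in Hlow.
  set (J := I (fun y => w y * f y)) in *. set (W := I w) in *.
  assert (0 <= M * W - J).
  { apply Rle_trans with (ps * (M - I f)); [|exact Hlow]. apply Rmult_le_pos; [lra|].
    rewrite <- (avg_const M) at 1. rewrite <- avg_minus by (auto; apply cont_on_const).
    apply avg_nonneg; [apply cont_on_minus; auto; apply cont_on_const|].
    intros y Hy. specialize (Hfm y Hy). lra. }
  replace (M - J / W) with ((M * W - J) / W) by (field; lra).
  apply Rle_trans with (M * W - J); [lra|].
  apply Rmult_le_reg_r with W; [lra|]. unfold Rdiv. rewrite Rmult_assoc, Rinv_l; [|lra]. nra.
Qed.

(* Applying weighted_avg_gap to f below its supremum and to - f below minus its infimum:
   the two averages lose a fraction ps of the oscillation of f. *)
Lemma weighted_avg_diff_le (w1 w2 f : Vec d -> R) ps Vb M0 x0 :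
  K x0 -> cont_on K w1 -> cont_on K w2 -> cont_on K f -> 0 < ps ->
  (forall y, K y -> ps <= w1 y <= 1) -> (forall y, K y -> ps <= w2 y <= 1) ->
  (forall y y', K y -> K y' -> f y - f y' <= Vb) -> (forall y, K y -> Rabs (f y) <= M0) ->
  I (fun y => w1 y * f y) / I w1 - I (fun y => w2 y * f y) / I w2 <= (1 - ps) * Vb.
Proof.
  intros Hx0 Hw1 Hw2 Hf Hps Hb1 Hb2 Hosc Hbd.
  set (M := Rsup (fun r => exists y, K y /\ r = f y)).
  assert (HM : is_lub (fun r => exists y, K y /\ r = f y) M).
  { apply Rsup_is_lub; [exists (f x0); eauto|].
    exists M0. intros r [y [Hy ->]]. apply Rabs_le_between; auto. }
  assert (Hfm : forall y, K y -> f y <= M) by (intros y Hy; apply (proj1 HM); eauto).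
  assert (Hfm2 : forall y, K y -> - f y <= Vb - M).
  { intros y Hy. enough (M <= f y + Vb) by lra. apply (proj2 HM). intros r [y' [Hy' ->]].
    specialize (Hosc y' y Hy' Hy). lra. }
  pose proof (cont_on_opp _ K f Hf) as Hnf.
  pose proof (weighted_avg_gap w1 f ps M Hw1 Hf Hps Hb1 Hfm) as A1.
  pose proof (weighted_avg_gap w2 (fun y => - f y) ps (Vb - M) Hw2 Hnf Hps Hb2 Hfm2) as A2.
  assert (Ineg : I (fun y => - f y) = - I f).
  { transitivity (I (fun y => -1 * f y)); [apply avg_ext; [exact Hnf | intros; ring]|].
    rewrite avg_scal by auto. ring. }
  assert (Iwneg : I (fun y => w2 y * - f y) = - I (fun y => w2 y * f y)).
  { transitivity (I (fun y => -1 * (w2 y * f y))); [apply avg_ext; [apply cont_on_mult; auto | intros; ring]|].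
    rewrite avg_scal by (apply cont_on_mult; auto). ring. }
  rewrite Ineg, Iwneg in A2. unfold Rdiv in *. lra.
Qed.

End AveragingFunctional.

(** * Differential inequalities *)

Definition clamp (a b s : R) := Rmax a (Rmin s b).

Lemma clamp_in a b s : a <= s <= b -> clamp a b s = s.
Proof. intros. unfold clamp. rewrite Rmin_left by lra. rewrite Rmax_right; lra. Qed.

Lemma clamp_range a b s : a <= b -> a <= clamp a b s <= b.
Proof. intros. unfold clamp. split; [apply Rmax_l|]. apply Rmax_lub; [lra|apply Rmin_r]. Qed.

Lemma Rmax_lipschitz a x y : Rabs (Rmax a x - Rmax a y) <= Rabs (x - y).
Proof. unfold Rmax. pose proof (Rle_abs (x-y)) as H1. pose proof (Rle_abs (-(x-y))) as H2. rewrite Rabs_Ropp in H2.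
  destruct (Rle_dec a x), (Rle_dec a y); apply Rabs_le; split; lra. Qed.

Lemma Rmin_lipschitz b x y : Rabs (Rmin x b - Rmin y b) <= Rabs (x - y).
Proof. unfold Rmin. pose proof (Rle_abs (x-y)) as H1. pose proof (Rle_abs (-(x-y))) as H2. rewrite Rabs_Ropp in H2.
  destruct (Rle_dec x b), (Rle_dec y b); apply Rabs_le; split; lra. Qed.

Lemma clamp_lipschitz a b s t : Rabs (clamp a b s - clamp a b t) <= Rabs (s - t).
Proof. unfold clamp. eapply Rle_trans; [apply Rmax_lipschitz|apply Rmin_lipschitz]. Qed.

(* Composing with clamp a b turns one-sided continuity at a and b into continuity there. *)
Lemma continuity_pt_clamp (u : R -> R) a b : a < b ->
  (forall t, a < t < b -> continuity_pt u t) ->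
  (forall e, 0 < e -> exists d, 0 < d /\ forall h, 0 <= h < d -> Rabs (u (a + h) - u a) < e) ->
  (forall e, 0 < e -> exists d, 0 < d /\ forall h, 0 <= h < d -> Rabs (u (b - h) - u b) < e) ->
  forall t, a <= t <= b -> continuity_pt (fun s => u (clamp a b s)) t.
Proof.
  intros Hab Hi Ha Hb t Ht. apply continuity_pt_of_eps. intros e He.
  rewrite (clamp_in a b t Ht).
  destruct (Req_dec t a) as [->|Hta]; [|destruct (Req_dec t b) as [->|Htb]].
  - destruct (Ha e He) as [d [Hd H]]. exists d; split; auto. intros y Hy.
    pose proof (clamp_range a b y ltac:(lra)). pose proof (clamp_lipschitz a b y a).
    rewrite (clamp_in a b a) in H1 by lra.
    replace (clamp a b y) with (a + (clamp a b y - a)) by ring. apply H.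
    apply Rabs_le_between in H1. split; [lra|]. lra.
  - destruct (Hb e He) as [d [Hd H]]. exists d; split; auto. intros y Hy.
    pose proof (clamp_range a b y ltac:(lra)). pose proof (clamp_lipschitz a b y b).
    rewrite (clamp_in a b b) in H1 by lra.
    replace (clamp a b y) with (b - (b - clamp a b y)) by ring. apply H.
    apply Rabs_le_between in H1. split; [lra|]. lra.
  - destruct (continuity_pt_eps u t (Hi t ltac:(lra)) e He) as [d [Hd H]].
    exists (Rmin d (Rmin (t - a) (b - t))). split.
    { apply Rmin_glb_lt; auto. apply Rmin_glb_lt; lra. }
    intros y Hy. pose proof (Rmin_l d (Rmin (t - a) (b - t))). pose proof (Rmin_r d (Rmin (t - a) (b - t))).
    pose proof (Rmin_l (t - a) (b - t)). pose proof (Rmin_r (t - a) (b - t)).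
    apply Rabs_def2 in Hy. rewrite clamp_in by lra. apply H. apply Rabs_def1; lra.
Qed.

Lemma mean_value_le (u du : R -> R) a b c : a < b ->
  (forall s, a < s < b -> derivable_pt_lim u s (du s)) ->
  (forall s, a < s < b -> du s <= c) ->
  (forall e, 0 < e -> exists d, 0 < d /\ forall h, 0 <= h < d -> Rabs (u (a + h) - u a) < e) ->
  (forall e, 0 < e -> exists d, 0 < d /\ forall h, 0 <= h < d -> Rabs (u (b - h) - u b) < e) ->
  u b - u a <= c * (b - a).
Proof.
  intros Hab Hd Hdc Ha Hb.
  set (F := fun s => u (clamp a b s) - c * s).
  assert (HF : F b <= F a).
  { apply dini_nonincreasing; auto.
    - intros t Ht. unfold F. apply continuity_pt_minus.
      + apply continuity_pt_clamp; auto. intros s Hs. eapply derivable_pt_lim_continuity_pt; apply Hd; auto.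
      + apply continuity_pt_mult; [apply continuity_pt_const; intros ? ?; auto|apply continuity_pt_id].
    - intros t Ht e He. destruct (derivable_pt_lim_bounds u t (du t) (Hd t Ht) e He) as [d [Hd0 H]].
      exists (Rmin d (b - t)). split; [apply Rmin_glb_lt; lra|].
      intros h Hh. pose proof (Rmin_l d (b - t)). pose proof (Rmin_r d (b - t)).
      destruct (H h ltac:(lra)) as [Hup _]. unfold F. rewrite !clamp_in by lra.
      specialize (Hdc t Ht). nra. }
  unfold F in HF. rewrite !clamp_in in HF by lra. lra.
Qed.

Lemma relaxation_comparison (u du : R -> R) a b c : a < b ->
  (forall s, a < s < b -> derivable_pt_lim u s (du s)) ->
  (forall s, a < s < b -> du s <= - u s + c) ->
  (forall e, 0 < e -> exists d, 0 < d /\ forall h, 0 <= h < d -> Rabs (u (a + h) - u a) < e) ->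
  (forall e, 0 < e -> exists d, 0 < d /\ forall h, 0 <= h < d -> Rabs (u (b - h) - u b) < e) ->
  u b <= exp (- (b - a)) * u a + (1 - exp (- (b - a))) * c.
Proof.
  intros Hab Hd Hdc Ha Hb.
  set (F := fun s => (u (clamp a b s) - c) * exp s).
  assert (HF : F b <= F a).
  { apply dini_nonincreasing; auto.
    - intros t Ht. unfold F. apply continuity_pt_mult.
      + apply continuity_pt_minus; [|apply continuity_pt_const; intros ? ?; auto].
        apply continuity_pt_clamp; auto. intros s Hs. eapply derivable_pt_lim_continuity_pt; apply Hd; auto.
      + apply derivable_continuous_pt, derivable_pt_exp.
    - intros t Ht e He.
      assert (DF : derivable_pt_lim (fun s => (u s - c) * exp s) t (du t * exp t + (u t - c) * exp t)).
      { apply (derivable_pt_lim_mult (fun s => u s - c) exp).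
        - replace (du t) with (du t - 0) by ring. apply derivable_pt_lim_minus; [apply Hd; auto|apply derivable_pt_lim_const].
        - apply derivable_pt_lim_exp. }
      destruct (derivable_pt_lim_bounds _ t _ DF e He) as [d [Hd0 H]].
      exists (Rmin d (b - t)). split; [apply Rmin_glb_lt; lra|].
      intros h Hh. pose proof (Rmin_l d (b - t)). pose proof (Rmin_r d (b - t)).
      destruct (H h ltac:(lra)) as [Hup _]. unfold F. rewrite !clamp_in by lra.
      specialize (Hdc t Ht). pose proof (exp_pos t).
      assert (du t * exp t + (u t - c) * exp t <= 0) by nra. nra. }
  unfold F in HF. rewrite !clamp_in in HF by lra.
  assert (exp b * exp (- (b - a)) = exp a) by (rewrite <- exp_plus; f_equal; ring).
  pose proof (exp_pos b). pose proof (exp_pos (- (b - a))).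
  apply Rmult_le_reg_l with (exp b); auto. nra.
Qed.

Lemma vderiv_vdot_eps {d} (S : R -> Prop) (f : R -> Vec d) t D e :
  vderiv_within S f t D -> forall ep, 0 < ep -> exists dl, 0 < dl /\
    forall h, h <> 0 -> Rabs h < dl -> S (t + h) ->
    Rabs ((vdot (f (t + h)) e - vdot (f t) e) / h - vdot D e) < ep.
Proof.
  intros H ep Hep. pose proof (vnorm_nonneg e).
  destruct (H (ep / (2 * (vnorm e + 1)))) as [dl [Hdl H2]].
  { apply Rdiv_lt_0_compat; lra. }
  exists dl; split; auto. intros h Hh Hhd HS. specialize (H2 h Hh Hhd HS).
  replace ((vdot (f (t + h)) e - vdot (f t) e) / h - vdot D e)
    with (vdot (vsub (vscale (/ h) (vsub (f (t + h)) (f t))) D) e).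
  2:{ rewrite vdot_sub_l, vdot_scale_l, vdot_sub_l. field; auto. }
  eapply Rle_lt_trans; [apply Rabs_vdot_le|].
  apply Rle_lt_trans with (ep / (2 * (vnorm e + 1)) * vnorm e).
  - apply Rmult_le_compat_r; auto.
  - apply Rle_lt_trans with (ep / (2 * (vnorm e + 1)) * (vnorm e + 1)).
    + apply Rmult_le_compat_l; [left; apply Rdiv_lt_0_compat|]; lra.
    + replace (ep / (2 * (vnorm e + 1)) * (vnorm e + 1)) with (ep / 2) by (field; lra). lra.
Qed.

Lemma vderiv_vdot {d} (f : R -> Vec d) t D e :
  vderiv_within (fun _ => True) f t D -> derivable_pt_lim (fun s => vdot (f s) e) t (vdot D e).
Proof.
  intros H ep Hep. destruct (vderiv_vdot_eps _ f t D e H ep Hep) as [dl [Hdl H2]].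
  exists (mkposreal dl Hdl). intros h Hh Hhd. apply H2; auto.
Qed.

Lemma vderiv_interior {d} (S : R -> Prop) (f : R -> Vec d) t D r :
  0 < r -> (forall h, Rabs h < r -> S (t + h)) ->
  vderiv_within S f t D -> vderiv_within (fun _ => True) f t D.
Proof.
  intros Hr HS H e He. destruct (H e He) as [dl [Hdl H2]]. exists (Rmin dl r).
  split; [apply Rmin_glb_lt; auto|]. intros h Hh Hhd _. apply H2; auto.
  - eapply Rlt_le_trans; [exact Hhd| apply Rmin_l].
  - apply HS. eapply Rlt_le_trans; [exact Hhd| apply Rmin_r].
Qed.

Lemma vderiv_sub {d} (S : R -> Prop) (f g : R -> Vec d) t D1 D2 :
  vderiv_within S f t D1 -> vderiv_within S g t D2 ->
  vderiv_within S (fun s => vsub (f s) (g s)) t (vsub D1 D2).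
Proof.
  intros Hf Hg e He. destruct (Hf (e/2) ltac:(lra)) as [d1 [Hd1 H1]]. destruct (Hg (e/2) ltac:(lra)) as [d2 [Hd2 H2]].
  exists (Rmin d1 d2); split; [apply Rmin_glb_lt; auto|]. intros h Hh Hhd HS.
  specialize (H1 h Hh (Rlt_le_trans _ _ _ Hhd (Rmin_l _ _)) HS).
  specialize (H2 h Hh (Rlt_le_trans _ _ _ Hhd (Rmin_r _ _)) HS).
  pose proof (vnorm_sub_le_add (vsub (vscale (/ h) (vsub (f (t + h)) (f t))) D1) (vsub (vscale (/ h) (vsub (g (t + h)) (g t))) D2)).
  erewrite vnorm_ext; [|intro; reflexivity].
  rewrite (vnorm_ext _ (vsub (vsub (vscale (/ h) (vsub (f (t + h)) (f t))) D1) (vsub (vscale (/ h) (vsub (g (t + h)) (g t))) D2))).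
  - lra.
  - intro i. unfold vsub, vscale. ring.
Qed.

Lemma vderiv_continuous {d} (S : R -> Prop) (f : R -> Vec d) t D :
  vderiv_within S f t D -> forall e, 0 < e -> exists dl, 0 < dl /\
    forall h, Rabs h < dl -> S (t + h) -> vnorm (vsub (f (t + h)) (f t)) < e.
Proof.
  intros H e He. destruct (H 1 ltac:(lra)) as [dl [Hdl H2]].
  pose proof (vnorm_nonneg D).
  exists (Rmin dl (e / (2 * (vnorm D + 1)))). split.
  { apply Rmin_glb_lt; auto. apply Rdiv_lt_0_compat; lra. }
  intros h Hh HS. destruct (Req_dec h 0) as [->|Hh0].
  { rewrite Rplus_0_r, vnorm_sub_diag. auto. }
  pose proof (Rmin_l dl (e / (2 * (vnorm D + 1)))). pose proof (Rmin_r dl (e / (2 * (vnorm D + 1)))).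
  specialize (H2 h Hh0 ltac:(lra) HS).
  set (Q := vsub (f (t + h)) (f t)) in *.
  assert (E1 : vnorm (vscale (/ h) Q) <= 1 + vnorm D).
  { pose proof (vnorm_le_add_sub (vscale (/ h) Q) D). lra. }
  rewrite vnorm_scale in E1. rewrite Rabs_inv in E1.
  assert (0 < Rabs h) by (apply Rabs_pos_lt; auto).
  assert (vnorm Q <= Rabs h * (1 + vnorm D)).
  { apply Rmult_le_reg_l with (/ Rabs h); [apply Rinv_0_lt_compat; auto|].
    rewrite <- Rmult_assoc, Rinv_l, Rmult_1_l; lra. }
  apply Rle_lt_trans with (Rabs h * (1 + vnorm D)); auto.
  apply Rle_lt_trans with (e / (2 * (vnorm D + 1)) * (1 + vnorm D)).
  - apply Rmult_le_compat_r; lra.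
  - replace (e / (2 * (vnorm D + 1)) * (1 + vnorm D)) with (e / 2) by (field; lra). lra.
Qed.

Lemma vmean_value_le {d} (f D : R -> Vec d) a b c : a < b ->
  (forall s, a < s < b -> vderiv_within (fun _ => True) f s (D s)) ->
  (forall s, a < s < b -> vnorm (D s) <= c) ->
  (forall e, 0 < e -> exists dl, 0 < dl /\ forall h, 0 <= h < dl -> vnorm (vsub (f (a + h)) (f a)) < e) ->
  (forall e, 0 < e -> exists dl, 0 < dl /\ forall h, 0 <= h < dl -> vnorm (vsub (f (b - h)) (f b)) < e) ->
  vnorm (vsub (f b) (f a)) <= c * (b - a).
Proof.
  intros Hab Hd Hdc Ha Hb.
  assert (Hc : 0 <= c) by (pose proof (Hdc ((a+b)/2) ltac:(lra)); pose proof (vnorm_nonneg (D ((a+b)/2))); lra).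
  apply vnorm_le_of_unit_vdot; [nra|]. intros e He.
  rewrite vdot_sub_l.
  apply (mean_value_le (fun s => vdot (f s) e) (fun s => vdot (D s) e)); auto.
  - intros s Hs. apply vderiv_vdot; auto.
  - intros s Hs. eapply Rle_trans; [apply vdot_unit_le_vnorm; auto| apply Hdc; auto].
  - intros ep Hep. destruct (Ha ep Hep) as [dl [Hdl H]]. exists dl; split; auto. intros h Hh.
    rewrite <- vdot_sub_l. eapply Rle_lt_trans; [apply Rabs_vdot_le|]. rewrite He, Rmult_1_r. auto.
  - intros ep Hep. destruct (Hb ep Hep) as [dl [Hdl H]]. exists dl; split; auto. intros h Hh.
    rewrite <- vdot_sub_l. eapply Rle_lt_trans; [apply Rabs_vdot_le|]. rewrite He, Rmult_1_r. auto.
Qed.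

Lemma one_sided_cont_endpoints {d} (f : R -> Vec d) a b : a < b ->
  (forall t, a <= t <= b -> forall e, 0 < e -> exists dl, 0 < dl /\
     forall t', a <= t' <= b -> Rabs (t' - t) < dl -> vnorm (vsub (f t') (f t)) < e) ->
  (forall e, 0 < e -> exists dl, 0 < dl /\ forall h, 0 <= h < dl -> vnorm (vsub (f (a + h)) (f a)) < e) /\
  (forall e, 0 < e -> exists dl, 0 < dl /\ forall h, 0 <= h < dl -> vnorm (vsub (f (b - h)) (f b)) < e).
Proof.
  intros Hab H. split.
  - intros e He. destruct (H a ltac:(lra) e He) as [dl [Hdl H2]]. exists (Rmin dl (b - a)).
    split; [apply Rmin_glb_lt; lra|]. intros h Hh. pose proof (Rmin_l dl (b-a)). pose proof (Rmin_r dl (b-a)).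
    apply H2; [lra|rewrite Rabs_right; lra].
  - intros e He. destruct (H b ltac:(lra) e He) as [dl [Hdl H2]]. exists (Rmin dl (b - a)).
    split; [apply Rmin_glb_lt; lra|]. intros h Hh. pose proof (Rmin_l dl (b-a)). pose proof (Rmin_r dl (b-a)).
    apply H2; [lra|rewrite Rabs_left1; lra].
Qed.

Lemma continuity_pt_Rmax_clamp (g : R -> R) a :
  (forall t0, a <= t0 -> forall ep, 0 < ep -> exists dl, 0 < dl /\
  forall t, a <= t -> Rabs (t - t0) < dl -> Rabs (g t - g t0) < ep) ->
  forall t, continuity_pt (fun r => g (Rmax a r)) t.
Proof.
  intros H t. apply continuity_pt_of_eps. intros ep Hep.
  destruct (H (Rmax a t) (Rmax_l a t) ep Hep) as [dl [Hdl H2]]. exists dl; split; auto.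
  intros y Hy. apply H2; [apply Rmax_l|]. eapply Rle_lt_trans; [apply Rmax_lipschitz|]. auto.
Qed.

(** * The flocking estimate *)

Section FlockingSolution.
Variables (d : nat) (tau : R) (Om : Vec d -> Prop) (I : (Vec d -> R) -> R)
  (v : R -> Vec d -> Vec d) (psi : Vec d -> R) (psit : R -> R) (eta : R -> Vec d -> Vec d).
Hypothesis Htau : 0 <= tau.
Hypothesis Hbdd : is_bounded Om.
Hypothesis HI : avg_functional (closure Om) I.
Hypothesis Hjc : jcont_on tau (closure Om) v.
Hypothesis HA0 : assumption_A0 psi psit.
Hypothesis HC1 : C1_into_C (closure Om) eta.
Hypothesis Hhist : history_compatible tau (closure Om) eta v.
Hypothesis HL : solves_L tau Om I psi eta v.
Variable Bv : R.
Hypothesis HBv : forall s x, -tau <= s <= 0 -> closure Om x -> vnorm (v s x) <= Bv.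

Notation K := (closure Om).

Lemma domain_nonempty : exists x0, Om x0.
Proof.
  apply NNPP; intro Hn.
  assert (HK : forall x, ~ K x).
  { intros x Hx. destruct (Hx 1 ltac:(lra)) as [y [Hy _]]. apply Hn; eauto. }
  pose proof (avg_nonneg d K I HI (fun _ => -1) (cont_on_const d K (-1)) (fun y Hy => False_ind _ (HK y Hy))).
  rewrite (avg_const d K I HI) in H. lra.
Qed.

(* The equation only holds on Om; bounds pass to the closure by continuity. *)
Lemma cont_on_closure_le (g : Vec d -> R) c : cont_on K g -> (forall x, Om x -> g x <= c) -> forall x, K x -> g x <= c.
Proof.
  intros Hg H x Hx. apply Rle_plus_epsilon. intros e He.
  destruct (Hg x Hx e He) as [dl [Hdl H2]]. destruct (Hx dl Hdl) as [y [Hy Hy2]].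
  specialize (H2 y (closure_incl Hy) Hy2). specialize (H y Hy). apply Rabs_def2 in H2. lra.
Qed.

Lemma v_cont_space t : -tau <= t -> vcont_on K (v t).
Proof.
  intros Ht x Hx e He. destruct (Hjc t x Ht Hx e He) as [dl [Hdl H]].
  exists dl; split; auto. intros y Hy Hyx. apply H; auto. rewrite Rminus_diag, Rabs_R0; auto.
Qed.

Lemma v_cont_time x t : K x -> -tau <= t -> forall e, 0 < e -> exists dl, 0 < dl /\
  forall t', -tau <= t' -> Rabs (t' - t) < dl -> vnorm (vsub (v t' x) (v t x)) < e.
Proof.
  intros Hx Ht e He. destruct (Hjc t x Ht Hx e He) as [dl [Hdl H]].
  exists dl; split; auto. intros t' Ht' Htt. apply H; auto. rewrite vnorm_sub_diag; auto.
Qed.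

Lemma v_equicont_time t0 : -tau <= t0 -> forall e, 0 < e -> exists dl, 0 < dl /\
  forall t, -tau <= t -> Rabs (t - t0) < dl -> forall x, K x -> vnorm (vsub (v t x) (v t0 x)) < e.
Proof.
  intros Ht0 e He. apply NNPP; intro Hn.
  assert (Hs : forall n : nat, exists p : R * Vec d, -tau <= fst p /\ Rabs (fst p - t0) < / (INR n + 1) /\
              K (snd p) /\ e <= vnorm (vsub (v (fst p) (snd p)) (v t0 (snd p)))).
  { intro n. apply NNPP; intro Hc. apply Hn. exists (/ (INR n + 1)). split; [apply inv_INR_S_pos|].
    intros t Ht Htt x Hx. apply Rnot_le_lt. intro Hle. apply Hc. exists (t, x). simpl. auto. }
  set (p := fun n => proj1_sig (constructive_indefinite_description _ (Hs n))).
  assert (Hp : forall n, -tau <= fst (p n) /\ Rabs (fst (p n) - t0) < / (INR n + 1) /\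
              K (snd (p n)) /\ e <= vnorm (vsub (v (fst (p n)) (snd (p n))) (v t0 (snd (p n))))).
  { intro n. unfold p. destruct (constructive_indefinite_description _ (Hs n)); auto. }
  destruct (closure_seq_compact Om Hbdd (fun n => snd (p n)) (fun n => proj1 (proj2 (proj2 (Hp n))))) as [phi [Hphi [l [Hl Hconv]]]].
  destruct (Hjc t0 l Ht0 Hl (e/2) ltac:(lra)) as [dl [Hdl Hj]].
  destruct (inv_INR_S_small dl Hdl) as [N1 HN1]. destruct (Hconv dl Hdl) as [N2 HN2].
  set (n := max N1 N2).
  destruct (Hp (phi n)) as [A1 [A2 [A3 A4]]].
  assert (B1 : vnorm (vsub (v (fst (p (phi n))) (snd (p (phi n)))) (v t0 l)) < e / 2).
  { apply Hj; auto. eapply Rlt_le_trans; [exact A2|]. apply Rle_trans with (/ (INR n + 1)); [apply inv_INR_S_le; auto|].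
    left; apply HN1; lia. apply HN2; lia. }
  assert (B2 : vnorm (vsub (v t0 (snd (p (phi n)))) (v t0 l)) < e / 2).
  { apply Hj; [lra | exact A3 | rewrite Rminus_diag, Rabs_R0; auto | apply HN2; lia]. }
  pose proof (vnorm_sub_triang (v (fst (p (phi n))) (snd (p (phi n)))) (v t0 l) (v t0 (snd (p (phi n))))).
  rewrite (vnorm_sub_sym (v t0 l) (v t0 (snd (p (phi n))))) in H. lra.
Qed.

Lemma vcont_on_bounded (g : Vec d -> Vec d) : vcont_on K g -> exists M, forall x, K x -> vnorm (g x) <= M.
Proof.
  intros Hg. apply NNPP; intro Hn.
  assert (Hs : forall n : nat, exists x, K x /\ INR n < vnorm (g x)).
  { intro n. apply NNPP; intro Hc. apply Hn. exists (INR n). intros x Hx. apply Rnot_lt_le. intro. apply Hc; eauto. }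
  set (p := fun n => proj1_sig (constructive_indefinite_description _ (Hs n))).
  assert (Hp : forall n, K (p n) /\ INR n < vnorm (g (p n))).
  { intro n. unfold p. destruct (constructive_indefinite_description _ (Hs n)); auto. }
  destruct (closure_seq_compact Om Hbdd p (fun n => proj1 (Hp n))) as [phi [Hphi [l [Hl Hconv]]]].
  destruct (Hg l Hl 1 ltac:(lra)) as [dl [Hdl Hc]].
  destruct (Hconv dl Hdl) as [N1 HN1]. destruct (INR_unbounded (vnorm (g l) + 1)) as [N2 HN2].
  set (n := max N1 N2).
  specialize (Hc (p (phi n)) (proj1 (Hp _)) (HN1 n ltac:(lia))).
  pose proof (proj2 (Hp (phi n))). pose proof (HN2 (phi n) ltac:(pose proof (Hphi n); lia)).
  pose proof (vnorm_le_add_sub (g (p (phi n))) (g l)). lra.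
Qed.

Lemma v_bounded t : -tau <= t -> exists M, forall x, K x -> vnorm (v t x) <= M.
Proof. intro Ht. apply vcont_on_bounded, v_cont_space, Ht. Qed.

Lemma v_hist_equicont_space y0 : K y0 -> forall e, 0 < e -> exists dl, 0 < dl /\
  forall y, K y -> vnorm (vsub y y0) < dl -> forall q, -tau <= q <= 0 -> vnorm (vsub (v q y) (v q y0)) < e.
Proof.
  intros Hy0 e He. apply NNPP; intro Hn.
  assert (Hs : forall n : nat, exists p : R * Vec d, (-tau <= fst p <= 0) /\ K (snd p) /\
              vnorm (vsub (snd p) y0) < / (INR n + 1) /\ e <= vnorm (vsub (v (fst p) (snd p)) (v (fst p) y0))).
  { intro n. apply NNPP; intro Hc. apply Hn. exists (/ (INR n + 1)). split; [apply inv_INR_S_pos|].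
    intros y Hy Hyy q Hq. apply Rnot_le_lt. intro Hle. apply Hc. exists (q, y). simpl. auto. }
  set (p := fun n => proj1_sig (constructive_indefinite_description _ (Hs n))).
  assert (Hp : forall n, (-tau <= fst (p n) <= 0) /\ K (snd (p n)) /\
              vnorm (vsub (snd (p n)) y0) < / (INR n + 1) /\ e <= vnorm (vsub (v (fst (p n)) (snd (p n))) (v (fst (p n)) y0))).
  { intro n. unfold p. destruct (constructive_indefinite_description _ (Hs n)); auto. }
  destruct (segment_seq_compact (-tau) 0 (fun n => fst (p n)) (fun n => proj1 (Hp n))) as [phi [Hphi [q [Hq Hconv]]]].
  destruct (Hjc q y0 ltac:(lra) Hy0 (e/2) ltac:(lra)) as [dl [Hdl Hj]].
  destruct (inv_INR_S_small dl Hdl) as [N1 HN1]. destruct (Hconv dl Hdl) as [N2 HN2].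
  set (n := max N1 N2).
  destruct (Hp (phi n)) as [A1 [A2 [A3 A4]]].
  assert (B1 : vnorm (vsub (v (fst (p (phi n))) (snd (p (phi n)))) (v q y0)) < e / 2).
  { apply Hj; auto; [lra| apply HN2; lia|]. eapply Rlt_le_trans; [exact A3|].
    apply Rle_trans with (/ (INR n + 1)); [apply inv_INR_S_le; auto|]. left; apply HN1; lia. }
  assert (B2 : vnorm (vsub (v (fst (p (phi n))) y0) (v q y0)) < e / 2).
  { apply Hj; [lra | exact Hy0 | apply HN2; lia | rewrite vnorm_sub_diag; auto]. }
  pose proof (vnorm_sub_triang (v (fst (p (phi n))) (snd (p (phi n)))) (v q y0) (v (fst (p (phi n))) y0)).
  rewrite (vnorm_sub_sym (v q y0) (v (fst (p (phi n))) y0)) in H. lra.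
Qed.

Lemma psi_cont : forall x eps, 0 < eps -> exists delta, 0 < delta /\
     forall y, vnorm (vsub y x) < delta -> Rabs (psi y - psi x) < eps.
Proof. apply HA0. Qed.
Lemma psi_rad x : psi x = psit (vnorm x).
Proof. apply HA0. Qed.
Lemma psit_mono r s : 0 <= r -> r <= s -> psit s <= psit r.
Proof. apply HA0. Qed.
Lemma psit_pos r : 0 <= r -> 0 < psit r.
Proof. apply HA0. Qed.
Lemma psit_0 : psit 0 = 1.
Proof. apply HA0. Qed.
Lemma psit_le_1 r : 0 <= r -> psit r <= 1.
Proof. intro. rewrite <- psit_0. apply psit_mono; lra. Qed.

Lemma eta_cont_pos t : 0 <= t -> vcont_on K (eta t).
Proof. intro Ht. destruct HC1 as [D [H1 _]]. apply H1; auto. Qed.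

Lemma eta_cont_time_pos x t : K x -> 0 <= t -> forall e, 0 < e -> exists dl, 0 < dl /\
  forall t', 0 <= t' -> Rabs (t' - t) < dl -> vnorm (vsub (eta t' x) (eta t x)) < e.
Proof.
  intros Hx Ht e He. destruct HC1 as [D [_ [H2 _]]].
  assert (Hd : vderiv_within (fun r => 0 <= r) (fun r => eta r x) t (D t x)).
  { intros ep Hep. destruct (H2 t Ht ep Hep) as [dl [Hdl H]]. exists dl; split; [auto|].
    intros h Hh Hhd HS. apply H; auto. }
  destruct (vderiv_continuous _ _ _ _ Hd e He) as [dl [Hdl H]]. exists dl; split; auto.
  intros t' Ht' Htt. replace t' with (t + (t' - t)) by ring. apply H; auto; replace (t + (t' - t)) with t' by ring; auto.
Qed.

Lemma eta_0 x : K x -> eta 0 x = x.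
Proof. intro Hx. apply (Hhist x Hx). Qed.

Lemma eta_hist_deriv x s : K x -> -tau <= s <= 0 ->
  vderiv_within (fun r => -tau <= r <= 0) (fun r => eta r x) s (v s x).
Proof. intros Hx Hs. apply (proj2 (Hhist x Hx)); auto. Qed.

Lemma eta_cont_time_hist x s : K x -> -tau <= s <= 0 -> forall e, 0 < e -> exists dl, 0 < dl /\
  forall s', -tau <= s' <= 0 -> Rabs (s' - s) < dl -> vnorm (vsub (eta s' x) (eta s x)) < e.
Proof.
  intros Hx Hs e He. destruct (vderiv_continuous _ _ _ _ (eta_hist_deriv x s Hx Hs) e He) as [dl [Hdl H]].
  exists dl; split; auto. intros s' Hs' Hss. replace s' with (s + (s' - s)) by ring.
  apply H; auto; replace (s + (s' - s)) with s' by ring; auto.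
Qed.

Lemma eta_cont_time x t : K x -> -tau <= t -> forall e, 0 < e -> exists dl, 0 < dl /\
  forall t', -tau <= t' -> Rabs (t' - t) < dl -> vnorm (vsub (eta t' x) (eta t x)) < e.
Proof.
  intros Hx Ht e He.
  destruct (Rlt_le_dec 0 t) as [Hp|Hn].
  - destruct (eta_cont_time_pos x t Hx ltac:(lra) e He) as [dl [Hdl H]]. exists (Rmin dl t).
    split; [apply Rmin_glb_lt; auto|]. intros t' Ht' Htt. pose proof (Rmin_l dl t). pose proof (Rmin_r dl t).
    apply Rabs_def2 in Htt as Htt'. apply H; lra.
  - destruct (Rlt_le_dec t 0) as [Hn'|Hz].
    + destruct (eta_cont_time_hist x t Hx ltac:(lra) e He) as [dl [Hdl H]]. exists (Rmin dl (- t)).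
      split; [apply Rmin_glb_lt; lra|]. intros t' Ht' Htt. pose proof (Rmin_l dl (-t)). pose proof (Rmin_r dl (-t)).
      apply Rabs_def2 in Htt as Htt'. apply H; lra.
    + assert (t = 0) by lra. subst t.
      destruct (eta_cont_time_pos x 0 Hx ltac:(lra) e He) as [d1 [Hd1 H1]].
      destruct (eta_cont_time_hist x 0 Hx ltac:(lra) e He) as [d2 [Hd2 H2]].
      exists (Rmin d1 d2). split; [apply Rmin_glb_lt; auto|]. intros t' Ht' Htt.
      pose proof (Rmin_l d1 d2). pose proof (Rmin_r d1 d2).
      destruct (Rle_dec 0 t'); [apply H1 | apply H2]; lra.
Qed.

Lemma eta_hist_deriv_interior x s : K x -> -tau < s < 0 -> vderiv_within (fun _ => True) (fun r => eta r x) s (v s x).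
Proof.
  intros Hx Hs. apply (vderiv_interior (fun r0 => -tau <= r0 <= 0) _ s _ (Rmin (s + tau) (- s))).
  + apply Rmin_glb_lt; lra.
  + intros h Hh. pose proof (Rmin_l (s+tau) (-s)). pose proof (Rmin_r (s+tau) (-s)). apply Rabs_def2 in Hh. lra.
  + apply eta_hist_deriv; auto; lra.
Qed.

Lemma eta_cont_time_in x a b : K x -> -tau <= a -> forall t, a <= t <= b -> forall e, 0 < e -> exists dl, 0 < dl /\
     forall t', a <= t' <= b -> Rabs (t' - t) < dl -> vnorm (vsub (eta t' x) (eta t x)) < e.
Proof.
  intros Hx Ha t Ht e He. destruct (eta_cont_time x t Hx ltac:(lra) e He) as [dl [Hdl H]]. exists dl; split; auto.
  intros t' Ht' Htt. apply H; auto; lra.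
Qed.

Lemma eta_diff_cont_time_in x x' a b : K x -> K x' -> -tau <= a -> forall t, a <= t <= b -> forall e, 0 < e -> exists dl, 0 < dl /\
     forall t', a <= t' <= b -> Rabs (t' - t) < dl ->
       vnorm (vsub (vsub (eta t' x) (eta t' x')) (vsub (eta t x) (eta t x'))) < e.
Proof.
  intros Hx Hx' Ha t Ht e He.
  destruct (eta_cont_time x t Hx ltac:(lra) (e/2) ltac:(lra)) as [d1 [Hd1 H1]].
  destruct (eta_cont_time x' t Hx' ltac:(lra) (e/2) ltac:(lra)) as [d2 [Hd2 H2]].
  exists (Rmin d1 d2); split; [apply Rmin_glb_lt; auto|]. intros t' Ht' Htt.
  pose proof (Rmin_l d1 d2). pose proof (Rmin_r d1 d2).
  rewrite (vnorm_ext _ (vsub (vsub (eta t' x) (eta t x)) (vsub (eta t' x') (eta t x')))) by (intro; unfold vsub; ring).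
  eapply Rle_lt_trans; [apply vnorm_sub_le_add|].
  pose proof (H1 t' ltac:(lra) ltac:(lra)). pose proof (H2 t' ltac:(lra) ltac:(lra)). lra.
Qed.

(* On the history interval eta_r x = x - int_r^0 v_s x ds, so continuity in x follows from the
   equicontinuity of the history velocities. *)
Lemma eta_cont_hist r : -tau <= r <= 0 -> vcont_on K (eta r).
Proof.
  intros Hr y0 Hy0 e He.
  destruct (Req_dec r 0) as [->|Hr0].
  { exists e; split; auto. intros y Hy Hyy. rewrite !eta_0; auto. }
  destruct (v_hist_equicont_space y0 Hy0 (e / (2 * (tau + 1)))) as [dl [Hdl HU]].
  { apply Rdiv_lt_0_compat; lra. }
  exists (Rmin dl (e / 2)). split; [apply Rmin_glb_lt; lra|].
  intros y Hy Hyy. pose proof (Rmin_l dl (e / 2)). pose proof (Rmin_r dl (e / 2)).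
  set (f := fun q => vsub (eta q y) (eta q y0)).
  destruct (one_sided_cont_endpoints f r 0 ltac:(lra) (eta_diff_cont_time_in y y0 r 0 Hy Hy0 ltac:(lra)))
    as [E1 E2].
  assert (Hm : vnorm (vsub (f 0) (f r)) <= e / (2 * (tau + 1)) * (0 - r)).
  { apply (vmean_value_le f (fun q => vsub (v q y) (v q y0))); auto; try lra.
    - intros s Hs. apply vderiv_sub; apply eta_hist_deriv_interior; auto; lra.
    - intros s Hs. left. apply HU; auto; lra. }
  unfold f in Hm. rewrite !eta_0 in Hm; auto.
  rewrite (vnorm_ext (vsub (eta r y) (eta r y0))
             (vsub (vsub y y0) (vsub (vsub y y0) (vsub (eta r y) (eta r y0))))) by (intro; unfold vsub; ring).
  eapply Rle_lt_trans; [apply vnorm_sub_le_add|].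
  assert (e / (2 * (tau + 1)) * (0 - r) <= e / 2).
  { apply Rle_trans with (e / (2 * (tau + 1)) * (tau + 1)).
    - apply Rmult_le_compat_l; [left; apply Rdiv_lt_0_compat|]; lra.
    - right. field. lra. }
  lra.
Qed.

Lemma eta_cont r : -tau <= r -> vcont_on K (eta r).
Proof. intro Hr. destruct (Rle_dec 0 r); [apply eta_cont_pos; auto| apply eta_cont_hist; lra]. Qed.

Definition weight s x := fun y => psi (vsub (eta s x) (eta (s - tau) y)).
Definition vel_avg s x e := I (fun y => weight s x y * vdot (v (s - tau) y) e) / I (weight s x).

Lemma weight_cont s x : 0 < s -> cont_on K (weight s x).
Proof. intro Hs. unfold weight. apply cont_on_comp_sub; [apply psi_cont | apply eta_cont; lra]. Qed.

Lemma v_vdot_deriv x s e : Om x -> 0 < s ->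
  derivable_pt_lim (fun r => vdot (v r x) e) s (vel_avg s x e - vdot (v s x) e).
Proof.
  intros Hx Hs. destruct (HL x s Hx Hs) as [_ H2].
  pose proof (vderiv_vdot _ s _ e H2) as D. cbv beta in D.
  match type of D with derivable_pt_lim _ _ ?l => replace (vel_avg s x e - vdot (v s x) e) with l; [exact D|] end.
  unfold vdot at 1.
  set (W := I (fun y => psi (vsub (eta s x) (eta (s - tau) y)))).
  set (G := fun (i : Fin.t d) (y : Vec d) => psi (vsub (eta s x) (eta (s - tau) y)) * v (s - tau) y i).
  rewrite (sum_fin_ext d _ (fun i => (/ W) * (I (G i) * e i) + (-1) * (v s x i * e i))) by (intro; unfold G, Rdiv; ring).
  rewrite sum_fin_lin. rewrite (avg_sum_fin d K I HI d G e).
  - unfold vel_avg. fold W. unfold weight. fold W.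
    rewrite (avg_ext d K I HI (fun y => sum_fin d (fun i => G i y * e i))
               (fun y => psi (vsub (eta s x) (eta (s - tau) y)) * vdot (v (s - tau) y) e)).
    + change (vdot (v s x) e) with (sum_fin d (fun i => v s x i * e i)). unfold Rdiv. ring.
    + apply cont_on_sum_fin. intro i. unfold G. apply cont_on_mult; [apply (weight_cont s x Hs)|apply cont_on_coord, v_cont_space; lra].
    + intros y Hy. unfold G, vdot. rewrite <- sum_fin_scal. apply sum_fin_ext. intro; ring.
  - intro i. unfold G. apply cont_on_mult; [apply (weight_cont s x Hs)|apply cont_on_coord, v_cont_space; lra].
Qed.

Lemma weight_bounds s x M :
  (forall y, K y -> vnorm (vsub (eta s x) (eta (s - tau) y)) <= M) ->
  forall y, K y -> psit M <= weight s x y <= 1.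
Proof.
  intros HM y Hy. unfold weight. rewrite psi_rad. split.
  - apply psit_mono; [apply vnorm_nonneg| apply HM; auto].
  - apply psit_le_1, vnorm_nonneg.
Qed.

Lemma eta_dist_bounded s x : 0 < s -> exists M, 0 <= M /\ forall y, K y -> vnorm (vsub (eta s x) (eta (s - tau) y)) <= M.
Proof.
  intro Hs. destruct (vcont_on_bounded (eta (s - tau)) (eta_cont (s - tau) ltac:(lra))) as [M HM].
  exists (vnorm (eta s x) + Rabs M). split; [pose proof (vnorm_nonneg (eta s x)); pose proof (Rabs_pos M); lra|].
  intros y Hy. eapply Rle_trans; [apply vnorm_sub_le_add|]. pose proof (HM y Hy). pose proof (Rle_abs M). lra.
Qed.

Definition vmax t := Rsup (fun r => exists y, K y /\ r = vnorm (v t y)).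

Lemma vmax_lub t : -tau <= t -> is_lub (fun r => exists y, K y /\ r = vnorm (v t y)) (vmax t).
Proof.
  intro Ht. apply Rsup_is_lub.
  - destruct domain_nonempty as [x0 Hx0]. exists (vnorm (v t x0)). exists x0; split; auto. apply closure_incl; auto.
  - destruct (v_bounded t Ht) as [M HM]. exists M. intros r [y [Hy ->]]. auto.
Qed.

Lemma vmax_ub t y : -tau <= t -> K y -> vnorm (v t y) <= vmax t.
Proof. intros Ht Hy. apply (is_lub_ub _ _ _ (vmax_lub t Ht)). eauto. Qed.

Lemma vmax_le t c : -tau <= t -> (forall y, K y -> vnorm (v t y) <= c) -> vmax t <= c.
Proof. intros Ht H. apply (is_lub_le _ _ _ (vmax_lub t Ht)). intros r [y [Hy ->]]. auto. Qed.

Lemma vmax_nonneg t : -tau <= t -> 0 <= vmax t.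
Proof.
  intro Ht. destruct domain_nonempty as [x0 Hx0].
  apply Rle_trans with (vnorm (v t x0)); [apply vnorm_nonneg|]. apply vmax_ub; auto. apply closure_incl; eauto.
Qed.

Lemma vel_avg_le x s e c : Om x -> 0 < s -> vnorm e = 1 ->
  (forall y, K y -> vdot (v (s - tau) y) e <= c) -> vel_avg s x e <= c.
Proof.
  intros Hx Hs He Hc. destruct (eta_dist_bounded s x Hs) as [M [HM0 HM]].
  unfold vel_avg. apply (weighted_avg_le d K I HI _ _ (psit M)).
  - apply weight_cont; auto.
  - apply cont_on_vdot, v_cont_space; lra.
  - apply psit_pos; auto.
  - apply weight_bounds; auto.
  - auto.
Qed.

Lemma v_vdot_cont_time x t e : K x -> -tau <= t -> vnorm e = 1 -> forall ep, 0 < ep -> exists dl, 0 < dl /\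
  forall t', -tau <= t' -> Rabs (t' - t) < dl -> Rabs (vdot (v t' x) e - vdot (v t x) e) < ep.
Proof.
  intros Hx Ht He ep Hep. destruct (v_cont_time x t Hx Ht ep Hep) as [dl [Hdl H]]. exists dl; split; auto.
  intros t' Ht' Htt. rewrite <- vdot_sub_l. eapply Rle_lt_trans; [apply Rabs_vdot_le|]. rewrite He, Rmult_1_r. auto.
Qed.

Lemma v_vdot_relaxation x e t h c : Om x -> vnorm e = 1 -> 0 <= t -> 0 < h ->
  (forall s, t < s < t + h -> vel_avg s x e <= c) ->
  vdot (v (t + h) x) e <= exp (- h) * vdot (v t x) e + (1 - exp (- h)) * c.
Proof.
  intros Hx He Ht Hh Hc.
  pose proof (relaxation_comparison (fun r => vdot (v r x) e) (fun r => vel_avg r x e - vdot (v r x) e) t (t + h) c ltac:(lra)) as C.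
  replace (t + h - t) with h in C by ring. apply C.
  - intros s Hs. apply v_vdot_deriv; auto; lra.
  - intros s Hs. specialize (Hc s Hs). lra.
  - intros ep Hep. destruct (v_vdot_cont_time x t e (closure_incl Hx) ltac:(lra) He ep Hep) as [dl [Hdl H]].
    exists dl; split; auto. intros h' Hh'. apply H; [lra| rewrite Rabs_right; lra].
  - intros ep Hep. destruct (v_vdot_cont_time x (t + h) e (closure_incl Hx) ltac:(lra) He ep Hep) as [dl [Hdl H]].
    exists (Rmin dl h); split; [apply Rmin_glb_lt; lra|]. intros h' Hh'.
    pose proof (Rmin_l dl h). pose proof (Rmin_r dl h).
    apply H; [lra| rewrite Rabs_left1; lra].
Qed.

Lemma vmax_relaxation t h c : 0 <= t -> 0 < h -> (forall s, t <= s <= t + h -> vmax (s - tau) <= c) ->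
  vmax (t + h) <= exp (- h) * vmax t + (1 - exp (- h)) * c.
Proof.
  intros Ht Hh Hc.
  pose proof (exp_pos (- h)). pose proof (exp_neg_le_1 h ltac:(lra)).
  assert (Hc0 : 0 <= c) by (pose proof (Hc t ltac:(lra)); pose proof (vmax_nonneg (t - tau) ltac:(lra)); lra).
  pose proof (vmax_nonneg t ltac:(lra)).
  apply vmax_le; [lra|].
  apply (cont_on_closure_le (fun y => vnorm (v (t + h) y))); [apply cont_on_vnorm, v_cont_space; lra|].
  intros x Hx. apply vnorm_le_of_unit_vdot; [nra|]. intros e He.
  eapply Rle_trans; [apply (v_vdot_relaxation x e t h c Hx He Ht Hh)|].
  - intros s Hs. apply vel_avg_le; auto; [lra|]. intros y Hy.
    eapply Rle_trans; [apply vdot_unit_le_vnorm; auto|]. eapply Rle_trans; [apply vmax_ub; auto; lra|]. apply Hc; lra.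
  - apply Rplus_le_compat_r. apply Rmult_le_compat_l; [lra|].
    eapply Rle_trans; [apply vdot_unit_le_vnorm; auto|]. apply vmax_ub; [lra|apply closure_incl; auto].
Qed.

Lemma vmax_cont t0 : -tau <= t0 -> forall ep, 0 < ep -> exists dl, 0 < dl /\
  forall t, -tau <= t -> Rabs (t - t0) < dl -> Rabs (vmax t - vmax t0) < ep.
Proof.
  intros Ht0 ep Hep. destruct (v_equicont_time t0 Ht0 (ep/2) ltac:(lra)) as [dl [Hdl H]].
  exists dl; split; auto. intros t Ht Htt.
  assert (A1 : vmax t <= vmax t0 + ep / 2).
  { apply vmax_le; auto. intros y Hy. pose proof (H t Ht Htt y Hy). pose proof (vmax_ub t0 y Ht0 Hy).
    pose proof (Rabs_vnorm_sub_le (v t y) (v t0 y)). apply Rabs_le_between in H2. lra. }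
  assert (A2 : vmax t0 <= vmax t + ep / 2).
  { apply vmax_le; auto. intros y Hy. pose proof (H t Ht Htt y Hy). pose proof (vmax_ub t y Ht Hy).
    pose proof (Rabs_vnorm_sub_le (v t y) (v t0 y)). apply Rabs_le_between in H2. lra. }
  apply Rabs_def1; lra.
Qed.

Definition R_V := RV tau K v.

Lemma R_V_lub : is_lub (fun r => exists s x, -tau <= s <= 0 /\ K x /\ r = vnorm (v s x)) R_V.
Proof.
  apply Rsup_is_lub.
  - destruct domain_nonempty as [x0 Hx0]. exists (vnorm (v 0 x0)). exists 0, x0. split; [lra|]. split; auto. apply closure_incl; auto.
  - exists Bv. intros r [s [x [Hs [Hx ->]]]]. apply HBv; auto.
Qed.

Lemma R_V_ub s x : -tau <= s <= 0 -> K x -> vnorm (v s x) <= R_V.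
Proof. intros Hs Hx. apply (is_lub_ub _ _ _ R_V_lub). exists s, x; auto. Qed.

Lemma R_V_nonneg : 0 <= R_V.
Proof.
  destruct domain_nonempty as [x0 Hx0]. apply Rle_trans with (vnorm (v 0 x0)); [apply vnorm_nonneg|].
  apply (R_V_ub 0 x0); [lra|apply closure_incl; auto].
Qed.

Lemma vmax_hist s : -tau <= s <= 0 -> vmax s <= R_V.
Proof. intro Hs. apply vmax_le; [lra|]. intros y Hy. apply R_V_ub; auto. Qed.

(* Maximum principle: the velocity relaxes towards a weighted average of delayed velocities,
   so sup_x |v_t x| never exceeds its value R_V on the initial history. *)
Lemma vnorm_v_le_R_V t x : -tau <= t -> K x -> vnorm (v t x) <= R_V.
Proof.
  intros Ht Hx. destruct (Rle_dec t 0) as [Hn|Hp]; [apply R_V_ub; auto; lra|].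
  eapply Rle_trans; [apply vmax_ub; eauto|].
  apply Rnot_lt_le. intro Hlt.
  set (ep := (vmax t - R_V) / 2).
  set (F := fun r => vmax (Rmax (-tau) r) - (R_V + ep)).
  assert (FE : forall r, -tau <= r -> F r = vmax r - (R_V + ep)) by (intros r Hr; unfold F; rewrite Rmax_right; auto).
  destruct (first_zero_crossing F t) as [T [HT [HFT HFl]]].
  - intro r. unfold F. apply continuity_pt_minus; [|apply continuity_pt_const; intros ? ?; auto].
    apply (continuity_pt_Rmax_clamp vmax (-tau) vmax_cont r).
  - rewrite FE by lra. pose proof (vmax_hist 0 ltac:(lra)). unfold ep. lra.
  - lra.
  - rewrite FE by lra. unfold ep. lra.
  - rewrite FE in HFT by lra.
    assert (Hc : forall s, 0 <= s <= 0 + T -> vmax (s - tau) <= R_V + ep).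
    { intros s Hs. destruct (Rle_dec (s - tau) 0) as [Hs0|Hs0].
      - pose proof (vmax_hist (s - tau) ltac:(lra)). unfold ep. lra.
      - destruct (Rlt_le_dec (s - tau) T) as [Hs1|Hs1].
        + pose proof (HFl (s - tau) ltac:(lra)). rewrite FE in H by lra. lra.
        + replace (s - tau) with T by lra. lra. }
    pose proof (vmax_relaxation 0 T (R_V + ep) ltac:(lra) HT Hc). rewrite Rplus_0_l in H.
    pose proof (HFl 0 ltac:(lra)). rewrite FE in H0 by lra.
    pose proof (exp_pos (- T)).
    assert (exp (- T) * vmax 0 < exp (- T) * (R_V + ep)) by (apply Rmult_lt_compat_l; lra). lra.
Qed.

Lemma eta_lipschitz x a b : K x -> -tau <= a -> a <= b ->
  vnorm (vsub (eta b x) (eta a x)) <= R_V * (b - a).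
Proof.
  intros Hx Ha Hab.
  assert (Hist : forall a b, -tau <= a -> a < b -> b <= 0 -> vnorm (vsub (eta b x) (eta a x)) <= R_V * (b - a)).
  { clear a b Ha Hab. intros a b Ha Hab Hb.
    destruct (one_sided_cont_endpoints (fun r => eta r x) a b Hab (eta_cont_time_in x a b Hx Ha)) as [E1 E2].
    apply (vmean_value_le (fun r => eta r x) (fun r => v r x)); auto.
    - intros s Hs. apply eta_hist_deriv_interior; auto; lra.
    - intros s Hs. apply vnorm_v_le_R_V; auto; lra. }
  assert (Pos : forall a b, 0 <= a -> a < b -> vnorm (vsub (eta b x) (eta a x)) <= R_V * (b - a)).
  { clear a b Ha Hab. intros a b Ha Hab.
    apply (cont_on_closure_le (fun y => vnorm (vsub (eta b y) (eta a y)))); auto.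
    - apply cont_on_vnorm, vcont_on_sub; apply eta_cont; lra.
    - intros y Hy.
      destruct (one_sided_cont_endpoints (fun r => eta r y) a b Hab
                  (eta_cont_time_in y a b (closure_incl Hy) ltac:(lra))) as [E1 E2].
      apply (vmean_value_le (fun r => eta r y) (fun r => v r y)); auto.
      + intros s Hs. apply (HL y s Hy); lra.
      + intros s Hs. apply vnorm_v_le_R_V; [lra|apply closure_incl; auto]. }
  destruct (Req_dec a b) as [->|Hne]; [rewrite vnorm_sub_diag; lra|].
  destruct (Rle_dec 0 a) as [Ha0|Ha0]; [apply Pos; lra|].
  destruct (Rle_dec b 0) as [Hb0|Hb0]; [apply Hist; lra|].
  pose proof (Hist a 0 Ha ltac:(lra) ltac:(lra)). pose proof (Pos 0 b ltac:(lra) ltac:(lra)).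
  pose proof (vnorm_sub_triang (eta b x) (eta 0 x) (eta a x)). lra.
Qed.

Lemma dV_lub t : -tau <= t -> is_lub (fun r => exists x y, K x /\ K y /\ r = vnorm (vsub (v t x) (v t y))) (dV K v t).
Proof.
  intro Ht. apply Rsup_is_lub.
  - destruct domain_nonempty as [x0 Hx0]. exists (vnorm (vsub (v t x0) (v t x0))). exists x0, x0. pose proof (closure_incl Hx0). auto.
  - exists (2 * R_V). intros r [x [y [Hx [Hy ->]]]]. eapply Rle_trans; [apply vnorm_sub_le_add|].
    pose proof (vnorm_v_le_R_V t x Ht Hx). pose proof (vnorm_v_le_R_V t y Ht Hy). lra.
Qed.

Lemma dV_ub t x y : -tau <= t -> K x -> K y -> vnorm (vsub (v t x) (v t y)) <= dV K v t.
Proof. intros Ht Hx Hy. apply (is_lub_ub _ _ _ (dV_lub t Ht)). exists x, y; auto. Qed.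

Lemma dV_le t c : -tau <= t -> (forall x y, K x -> K y -> vnorm (vsub (v t x) (v t y)) <= c) -> dV K v t <= c.
Proof. intros Ht H. apply (is_lub_le _ _ _ (dV_lub t Ht)). intros r [x [y [Hx [Hy ->]]]]. auto. Qed.

Lemma dV_nonneg t : -tau <= t -> 0 <= dV K v t.
Proof. intro Ht. destruct domain_nonempty as [x0 Hx0]. pose proof (closure_incl Hx0).
  apply Rle_trans with (vnorm (vsub (v t x0) (v t x0))); [apply vnorm_nonneg|]. apply dV_ub; auto. Qed.

Lemma dV_le_2R_V t : -tau <= t -> dV K v t <= 2 * R_V.
Proof. intro Ht. apply dV_le; auto. intros x y Hx Hy. eapply Rle_trans; [apply vnorm_sub_le_add|].
  pose proof (vnorm_v_le_R_V t x Ht Hx). pose proof (vnorm_v_le_R_V t y Ht Hy). lra. Qed.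

Lemma eta_diff_lipschitz x x' a b c : K x -> K x' -> -tau <= a -> a <= b -> (forall s, a <= s <= b -> dV K v s <= c) ->
  vnorm (vsub (vsub (eta b x) (eta b x')) (vsub (eta a x) (eta a x'))) <= c * (b - a).
Proof.
  intros Hx Hx' Ha Hab Hc.
  assert (Hist : forall a b, -tau <= a -> a < b -> b <= 0 -> (forall s, a <= s <= b -> dV K v s <= c) ->
     vnorm (vsub (vsub (eta b x) (eta b x')) (vsub (eta a x) (eta a x'))) <= c * (b - a)).
  { clear a b Ha Hab Hc. intros a b Ha Hab Hb Hc.
    destruct (one_sided_cont_endpoints (fun r => vsub (eta r x) (eta r x')) a b Hab (eta_diff_cont_time_in x x' a b Hx Hx' Ha)) as [E1 E2].
    apply (vmean_value_le (fun r => vsub (eta r x) (eta r x')) (fun r => vsub (v r x) (v r x'))); auto.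
    - intros s Hs. apply vderiv_sub; apply eta_hist_deriv_interior; auto; lra.
    - intros s Hs. eapply Rle_trans; [apply dV_ub; auto; lra| apply Hc; lra]. }
  assert (Pos : forall a b, 0 <= a -> a < b -> (forall s, a <= s <= b -> dV K v s <= c) ->
     forall x x', K x -> K x' -> vnorm (vsub (vsub (eta b x) (eta b x')) (vsub (eta a x) (eta a x'))) <= c * (b - a)).
  { clear a b Ha Hab Hc Hist. intros a b Ha Hab Hc p p' Hp Hp'.
    assert (Hcont : forall z, K z -> cont_on K (fun y => vnorm (vsub (vsub (eta b y) (eta b z)) (vsub (eta a y) (eta a z))))).
    { intros z Hz. apply cont_on_vnorm, vcont_on_sub; apply vcont_on_sub; try apply vcont_on_const; apply eta_cont; lra. }
    assert (Hcont' : forall z, K z -> cont_on K (fun y => vnorm (vsub (vsub (eta b z) (eta b y)) (vsub (eta a z) (eta a y))))).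
    { intros z Hz. apply cont_on_vnorm, vcont_on_sub; apply vcont_on_sub; try apply vcont_on_const; apply eta_cont; lra. }
    apply (cont_on_closure_le _ _ (Hcont' p Hp)); auto. intros y' Hy'.
    apply (cont_on_closure_le _ _ (Hcont y' (closure_incl Hy'))); auto. intros y Hy.
    destruct (one_sided_cont_endpoints (fun r => vsub (eta r y) (eta r y')) a b Hab
      (eta_diff_cont_time_in y y' a b (closure_incl Hy) (closure_incl Hy') ltac:(lra))) as [E1 E2].
    apply (vmean_value_le (fun r => vsub (eta r y) (eta r y')) (fun r => vsub (v r y) (v r y'))); auto.
    - intros s Hs. apply vderiv_sub; [apply (HL y s Hy) | apply (HL y' s Hy')]; lra.
    - intros s Hs. eapply Rle_trans; [apply dV_ub; [lra|apply closure_incl; auto|apply closure_incl; auto]| apply Hc; lra]. }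
  destruct (Req_dec a b) as [->|Hne]; [rewrite vnorm_sub_diag; lra|].
  destruct (Rle_dec 0 a) as [Ha0|Ha0]; [apply Pos; auto; lra|].
  destruct (Rle_dec b 0) as [Hb0|Hb0]; [apply Hist; auto; lra|].
  pose proof (Hist a 0 Ha ltac:(lra) ltac:(lra) ltac:(intros; apply Hc; lra)).
  pose proof (Pos 0 b ltac:(lra) ltac:(lra) ltac:(intros; apply Hc; lra) x x' Hx Hx').
  pose proof (vnorm_sub_triang (vsub (eta b x) (eta b x')) (vsub (eta 0 x) (eta 0 x')) (vsub (eta a x) (eta a x'))). lra.
Qed.

Lemma eta_bounded t : -tau <= t -> exists M, forall x, K x -> vnorm (eta t x) <= M.
Proof.
  intro Ht. destruct (closure_bounded Om Hbdd) as [MK HMK]. exists (MK + R_V * Rabs t).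
  intros x Hx. pose proof (vnorm_le_add_sub (eta t x) (eta 0 x)). rewrite eta_0 in H by auto.
  pose proof (HMK x Hx). pose proof R_V_nonneg.
  destruct (Rle_dec 0 t).
  - pose proof (eta_lipschitz x 0 t Hx ltac:(lra) r). rewrite eta_0 in H2 by auto. rewrite Rabs_right by lra. lra.
  - pose proof (eta_lipschitz x t 0 Hx Ht ltac:(lra)). rewrite eta_0 in H2 by auto. rewrite vnorm_sub_sym in H2.
    rewrite Rabs_left by lra. lra.
Qed.

Lemma dX_lub t : -tau <= t -> is_lub (fun r => exists x y, K x /\ K y /\ r = vnorm (vsub (eta t x) (eta t y))) (dX K eta t).
Proof.
  intro Ht. apply Rsup_is_lub.
  - destruct domain_nonempty as [x0 Hx0]. exists (vnorm (vsub (eta t x0) (eta t x0))). exists x0, x0. pose proof (closure_incl Hx0). auto.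
  - destruct (eta_bounded t Ht) as [M HM]. exists (2 * M). intros r [x [y [Hx [Hy ->]]]]. eapply Rle_trans; [apply vnorm_sub_le_add|].
    pose proof (HM x Hx). pose proof (HM y Hy). lra.
Qed.

Lemma dX_ub t x y : -tau <= t -> K x -> K y -> vnorm (vsub (eta t x) (eta t y)) <= dX K eta t.
Proof. intros Ht Hx Hy. apply (is_lub_ub _ _ _ (dX_lub t Ht)). exists x, y; auto. Qed.

Lemma dX_le t c : -tau <= t -> (forall x y, K x -> K y -> vnorm (vsub (eta t x) (eta t y)) <= c) -> dX K eta t <= c.
Proof. intros Ht H. apply (is_lub_le _ _ _ (dX_lub t Ht)). intros r [x [y [Hx [Hy ->]]]]. auto. Qed.

Lemma dX_nonneg t : -tau <= t -> 0 <= dX K eta t.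
Proof. intro Ht. destruct domain_nonempty as [x0 Hx0]. pose proof (closure_incl Hx0).
  apply Rle_trans with (vnorm (vsub (eta t x0) (eta t x0))); [apply vnorm_nonneg|]. apply dX_ub; auto. Qed.

Lemma lag_bound_nonneg t : -tau <= t -> 0 <= dX K eta t + R_V * tau.
Proof. intro Ht. pose proof (dX_nonneg t Ht). pose proof R_V_nonneg. nra. Qed.

Lemma dX_growth t h c : -tau <= t -> 0 < h -> (forall s, t <= s <= t + h -> dV K v s <= c) ->
  dX K eta (t + h) <= dX K eta t + h * c.
Proof.
  intros Ht Hh Hc. apply dX_le; [lra|]. intros x y Hx Hy.
  pose proof (vnorm_le_add_sub (vsub (eta (t + h) x) (eta (t + h) y)) (vsub (eta t x) (eta t y))).
  pose proof (eta_diff_lipschitz x y t (t + h) c Hx Hy Ht ltac:(lra) Hc). pose proof (dX_ub t x y Ht Hx Hy).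
  replace (t + h - t) with h in H0 by ring. lra.
Qed.

Lemma v_diff_vdot_relaxation x x' e t h c : Om x -> Om x' -> vnorm e = 1 -> 0 <= t -> 0 < h ->
  (forall s, t < s < t + h -> vel_avg s x e - vel_avg s x' e <= c) ->
  vdot (vsub (v (t + h) x) (v (t + h) x')) e <= exp (- h) * vdot (vsub (v t x) (v t x')) e + (1 - exp (- h)) * c.
Proof.
  intros Hx Hx' He Ht Hh Hc. rewrite !vdot_sub_l.
  pose proof (relaxation_comparison (fun r => vdot (v r x) e - vdot (v r x') e)
     (fun r => (vel_avg r x e - vdot (v r x) e) - (vel_avg r x' e - vdot (v r x') e)) t (t + h) c ltac:(lra)) as C.
  replace (t + h - t) with h in C by ring. apply C.
  - intros s Hs. apply derivable_pt_lim_minus; apply v_vdot_deriv; auto; lra.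
  - intros s Hs. specialize (Hc s Hs). lra.
  - intros ep Hep. destruct (v_vdot_cont_time x t e (closure_incl Hx) ltac:(lra) He (ep/2) ltac:(lra)) as [d1 [Hd1 H1]].
    destruct (v_vdot_cont_time x' t e (closure_incl Hx') ltac:(lra) He (ep/2) ltac:(lra)) as [d2 [Hd2 H2]].
    exists (Rmin d1 d2); split; [apply Rmin_glb_lt; auto|]. intros h' Hh'.
    pose proof (Rmin_l d1 d2). pose proof (Rmin_r d1 d2).
    pose proof (H1 (t + h') ltac:(lra) ltac:(rewrite Rabs_right; lra)).
    pose proof (H2 (t + h') ltac:(lra) ltac:(rewrite Rabs_right; lra)).
    apply Rabs_def2 in H3. apply Rabs_def2 in H4. apply Rabs_def1; lra.
  - intros ep Hep. destruct (v_vdot_cont_time x (t + h) e (closure_incl Hx) ltac:(lra) He (ep/2) ltac:(lra)) as [d1 [Hd1 H1]].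
    destruct (v_vdot_cont_time x' (t + h) e (closure_incl Hx') ltac:(lra) He (ep/2) ltac:(lra)) as [d2 [Hd2 H2]].
    exists (Rmin (Rmin d1 d2) h); split; [repeat apply Rmin_glb_lt; auto|]. intros h' Hh'.
    pose proof (Rmin_l (Rmin d1 d2) h). pose proof (Rmin_r (Rmin d1 d2) h).
    pose proof (Rmin_l d1 d2). pose proof (Rmin_r d1 d2).
    pose proof (H1 (t + h - h') ltac:(lra) ltac:(rewrite Rabs_left1; lra)).
    pose proof (H2 (t + h - h') ltac:(lra) ltac:(rewrite Rabs_left1; lra)).
    apply Rabs_def2 in H5. apply Rabs_def2 in H6. apply Rabs_def1; lra.
Qed.

(* Each particle is within dX (s - tau) + R_V tau of every delayed position, so every weight is at
   least psit of that distance and weighted_avg_diff_le applies. *)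
Lemma vel_avg_diff_le x x' s e : Om x -> Om x' -> 0 < s -> vnorm e = 1 ->
  vel_avg s x e - vel_avg s x' e <= (1 - psit (dX K eta (s - tau) + R_V * tau)) * dV K v (s - tau).
Proof.
  intros Hx Hx' Hs He.
  set (M := dX K eta (s - tau) + R_V * tau).
  assert (HM0 : 0 <= M) by (unfold M; pose proof (dX_nonneg (s - tau) ltac:(lra)); pose proof R_V_nonneg; nra).
  assert (Hb : forall z, Om z -> forall y, K y -> psit M <= weight s z y <= 1).
  { intros z Hz. apply weight_bounds; auto. intros y Hy.
    rewrite (vnorm_ext _ (vsub (vsub (eta s z) (eta (s - tau) z)) (vsub (eta (s - tau) y) (eta (s - tau) z))))
      by (intro; unfold vsub; ring).
    eapply Rle_trans; [apply vnorm_sub_le_add|].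
    pose proof (eta_lipschitz z (s - tau) s (closure_incl Hz) ltac:(lra) ltac:(lra)). replace (s - (s - tau)) with tau in H by ring.
    pose proof (dX_ub (s - tau) y z ltac:(lra) Hy (closure_incl Hz)). unfold M. lra. }
  destruct domain_nonempty as [x0 Hx0].
  unfold vel_avg. apply (weighted_avg_diff_le d K I HI _ _ _ (psit M) (dV K v (s - tau)) R_V x0).
  - apply closure_incl; auto.
  - apply weight_cont; auto.
  - apply weight_cont; auto.
  - apply cont_on_vdot, v_cont_space; lra.
  - apply psit_pos; auto.
  - apply Hb; auto.
  - apply Hb; auto.
  - intros y y' Hy Hy'. rewrite <- vdot_sub_l. eapply Rle_trans; [apply vdot_unit_le_vnorm; auto|]. apply dV_ub; auto; lra.
  - intros y Hy. eapply Rle_trans; [apply Rabs_vdot_le|]. rewrite He, Rmult_1_r. apply vnorm_v_le_R_V; auto; lra.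
Qed.

Lemma dV_relaxation t h c : 0 <= t -> 0 < h ->
  (forall s, t <= s <= t + h -> (1 - psit (dX K eta (s - tau) + R_V * tau)) * dV K v (s - tau) <= c) ->
  dV K v (t + h) <= exp (- h) * dV K v t + (1 - exp (- h)) * c.
Proof.
  intros Ht Hh Hc.
  pose proof (exp_pos (- h)). pose proof (exp_neg_le_1 h ltac:(lra)).
  assert (Hc0 : 0 <= c).
  { pose proof (Hc t ltac:(lra)). pose proof (dV_nonneg (t - tau) ltac:(lra)).
    assert (psit (dX K eta (t - tau) + R_V * tau) <= 1) by (apply psit_le_1, lag_bound_nonneg; lra).
    nra. }
  pose proof (dV_nonneg t ltac:(lra)).
  apply dV_le; [lra|].
  intros x x' Hx Hx'.
  assert (Hcont : forall z, K z -> cont_on K (fun y => vnorm (vsub (v (t + h) y) (v (t + h) z)))).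
  { intros z Hz. apply cont_on_vnorm, vcont_on_sub; [apply v_cont_space; lra| apply vcont_on_const]. }
  assert (Hcont' : forall z, K z -> cont_on K (fun y => vnorm (vsub (v (t + h) z) (v (t + h) y)))).
  { intros z Hz. apply cont_on_vnorm, vcont_on_sub; [apply vcont_on_const| apply v_cont_space; lra]. }
  apply (cont_on_closure_le _ _ (Hcont' x Hx)); auto. intros y' Hy'.
  apply (cont_on_closure_le _ _ (Hcont y' (closure_incl Hy'))); auto. intros y Hy.
  apply vnorm_le_of_unit_vdot; [nra|]. intros e He.
  eapply Rle_trans; [apply (v_diff_vdot_relaxation y y' e t h c Hy Hy' He Ht Hh)|].
  - intros s Hs. eapply Rle_trans; [apply vel_avg_diff_le; auto; lra| apply Hc; lra].
  - apply Rplus_le_compat_r. apply Rmult_le_compat_l; [lra|].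
    eapply Rle_trans; [apply vdot_unit_le_vnorm; auto|]. apply dV_ub; [lra|apply closure_incl; auto|apply closure_incl; auto].
Qed.

Lemma dV_cont t0 : -tau <= t0 -> forall ep, 0 < ep -> exists dl, 0 < dl /\
  forall t, -tau <= t -> Rabs (t - t0) < dl -> Rabs (dV K v t - dV K v t0) < ep.
Proof.
  intros Ht0 ep Hep. destruct (v_equicont_time t0 Ht0 (ep/4) ltac:(lra)) as [dl [Hdl H]].
  exists dl; split; auto. intros t Ht Htt.
  assert (A : forall a b x y, -tau <= a -> -tau <= b -> K x -> K y ->
     (forall z, K z -> vnorm (vsub (v a z) (v b z)) < ep / 4) ->
     vnorm (vsub (v a x) (v a y)) <= dV K v b + ep / 2).
  { intros a b x y Ha Hb Hx Hy Hz.
    rewrite (vnorm_ext _ (vsub (vsub (v a x) (v b x)) (vsub (vsub (v a y) (v b y)) (vsub (v b x) (v b y))))) by (intro; unfold vsub; ring).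
    eapply Rle_trans; [apply vnorm_sub_le_add|]. pose proof (vnorm_sub_le_add (vsub (v a y) (v b y)) (vsub (v b x) (v b y))).
    pose proof (Hz x Hx). pose proof (Hz y Hy). pose proof (dV_ub b x y Hb Hx Hy). lra. }
  assert (A1 : dV K v t <= dV K v t0 + ep / 2).
  { apply dV_le; [exact Ht|]. intros x y Hx Hy. apply A; auto. }
  assert (A2 : dV K v t0 <= dV K v t + ep / 2).
  { apply dV_le; [exact Ht0|]. intros x y Hx Hy. apply A; auto. intros z Hz. rewrite vnorm_sub_sym. auto. }
  apply Rabs_def1; lra.
Qed.

Lemma dX_cont t0 : -tau <= t0 -> forall ep, 0 < ep -> exists dl, 0 < dl /\
  forall t, -tau <= t -> Rabs (t - t0) < dl -> Rabs (dX K eta t - dX K eta t0) < ep.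
Proof.
  intros Ht0 ep Hep. pose proof R_V_nonneg. exists (ep / (2 * (2 * R_V + 1))). split; [apply Rdiv_lt_0_compat; lra|].
  intros t Ht Htt.
  assert (A : forall a b, -tau <= a -> -tau <= b -> dX K eta a <= dX K eta b + 2 * R_V * Rabs (a - b)).
  { intros a b Ha Hb. apply dX_le; auto. intros x y Hx Hy.
    pose proof (vnorm_le_add_sub (vsub (eta a x) (eta a y)) (vsub (eta b x) (eta b y))).
    pose proof (dX_ub b x y Hb Hx Hy).
    assert (vnorm (vsub (vsub (eta a x) (eta a y)) (vsub (eta b x) (eta b y))) <= 2 * R_V * Rabs (a - b)).
    { destruct (Rle_dec b a).
      - pose proof (eta_diff_lipschitz x y b a (2 * R_V) Hx Hy Hb r ltac:(intros; apply dV_le_2R_V; lra)). rewrite Rabs_right by lra. lra.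
      - pose proof (eta_diff_lipschitz x y a b (2 * R_V) Hx Hy Ha ltac:(lra) ltac:(intros; apply dV_le_2R_V; lra)) as Hs2.
        rewrite vnorm_sub_sym in Hs2. rewrite Rabs_left by lra. lra. }
    lra. }
  pose proof (A t t0 Ht Ht0). pose proof (A t0 t Ht0 Ht). rewrite Rabs_minus_sym in H1.
  assert (2 * R_V * Rabs (t - t0) < ep).
  { apply Rle_lt_trans with ((2 * R_V + 1) * Rabs (t - t0)); [pose proof (Rabs_pos (t - t0)); nra|].
    apply Rlt_le_trans with ((2 * R_V + 1) * (ep / (2 * (2 * R_V + 1)))).
    - apply Rmult_lt_compat_l; lra.
    - replace ((2 * R_V + 1) * (ep / (2 * (2 * R_V + 1)))) with (ep / 2) by (field; lra). lra. }
  apply Rabs_def1; lra.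
Qed.

Lemma psit_cont : (0 < d)%nat -> forall r0, 0 <= r0 -> forall ep, 0 < ep -> exists dl, 0 < dl /\
  forall r, 0 <= r -> Rabs (r - r0) < dl -> Rabs (psit r - psit r0) < ep.
Proof.
  intros Hd r0 Hr0 ep Hep. destruct (unit_vector_exists d Hd) as [e1 He1].
  assert (Hp : forall r, 0 <= r -> psit r = psi (vscale r e1)).
  { intros r Hr. rewrite psi_rad, vnorm_scale, He1, Rmult_1_r, Rabs_right; [reflexivity|lra]. }
  destruct (psi_cont (vscale r0 e1) ep Hep) as [dl [Hdl H]]. exists dl; split; auto.
  intros r Hr Hrr. rewrite !Hp by auto. apply H.
  rewrite (vnorm_ext _ (vscale (r - r0) e1)) by (intro; unfold vsub, vscale; ring).
  rewrite vnorm_scale, He1, Rmult_1_r. auto.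
Qed.

(* Extensions to all of R, frozen left of - tau (resp. 0), to which the scalar lemmas apply. *)
Definition dV_ext t := dV K v (Rmax (- tau) t).
Definition dX_ext t := dX K eta (Rmax (- tau) t).
Definition psit_ext r := psit (Rmax 0 r).

Lemma dV_ext_eq t : -tau <= t -> dV_ext t = dV K v t.
Proof. intro Ht. unfold dV_ext. rewrite Rmax_right; auto. Qed.

Lemma dX_ext_eq t : -tau <= t -> dX_ext t = dX K eta t.
Proof. intro Ht. unfold dX_ext. rewrite Rmax_right; auto. Qed.

Lemma psit_ext_eq r : 0 <= r -> psit_ext r = psit r.
Proof. intro Hr. unfold psit_ext. rewrite Rmax_right; auto. Qed.

Lemma dV_ext_relax t h c : 0 <= t -> 0 < h ->
  (forall s, t <= s <= t + h -> (1 - psit_ext (dX_ext (s - tau) + R_V * tau)) * dV_ext (s - tau) <= c) ->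
  dV_ext (t + h) <= exp (- h) * dV_ext t + (1 - exp (- h)) * c.
Proof.
  intros Ht Hh Hc. rewrite !dV_ext_eq by lra. apply dV_relaxation; auto.
  intros s Hs. specialize (Hc s Hs).
  rewrite dX_ext_eq, dV_ext_eq, psit_ext_eq in Hc by (try apply lag_bound_nonneg; lra). exact Hc.
Qed.

Lemma dX_ext_growth t h c : - tau <= t -> 0 < h -> (forall s, t <= s <= t + h -> dV_ext s <= c) ->
  dX_ext (t + h) <= dX_ext t + h * c.
Proof.
  intros Ht Hh Hc. rewrite !dX_ext_eq by lra. apply dX_growth; auto.
  intros s Hs. rewrite <- dV_ext_eq by lra. auto.
Qed.

Lemma dV_ext_cont t : continuity_pt dV_ext t.
Proof. apply (continuity_pt_Rmax_clamp (dV K v) (- tau) dV_cont). Qed.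

Lemma dX_ext_cont t : continuity_pt dX_ext t.
Proof. apply (continuity_pt_Rmax_clamp (dX K eta) (- tau) dX_cont). Qed.

Lemma psit_ext_cont : (0 < d)%nat -> forall r, continuity_pt psit_ext r.
Proof. intros Hd r. apply (continuity_pt_Rmax_clamp psit 0 (psit_cont Hd)). Qed.

Lemma psit_ext_pos r : 0 < psit_ext r.
Proof. apply psit_pos, Rmax_l. Qed.

Lemma psit_ext_le_1 r : psit_ext r <= 1.
Proof. apply psit_le_1, Rmax_l. Qed.

Lemma psit_ext_noninc r s : r <= s -> psit_ext s <= psit_ext r.
Proof. intro Hrs. apply psit_mono; [apply Rmax_l | apply Rle_max_compat_l; auto]. Qed.

Lemma dV_ext_nonneg t : 0 <= dV_ext t.
Proof. apply dV_nonneg, Rmax_l. Qed.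

Lemma flocking_condition_ext : flocking_condition tau K psit eta v ->
  exists b, dV_ext 0 + RInt dV_ext (- tau) 0 < RInt psit_ext (dX_ext (- tau) + R_V * tau) b.
Proof.
  intro Hfl. unfold flocking_condition in Hfl. cbv zeta in Hfl. change (RV tau K v) with R_V in Hfl.
  destruct Hfl as [b [Hab [pr1 [pr2 Hlt]]]]. exists b.
  rewrite dV_ext_eq, dX_ext_eq by lra.
  rewrite (RInt_ext dV_ext (dV K v) (- tau) 0).
  2:{ intros x Hx. rewrite Rmin_left in Hx by lra. apply dV_ext_eq; lra. }
  rewrite (RInt_ext psit_ext psit (dX K eta (- tau) + R_V * tau) b).
  2:{ intros x Hx. rewrite Rmin_left in Hx by exact Hab. apply psit_ext_eq.
      pose proof (lag_bound_nonneg (- tau) ltac:(lra)). lra. }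
  rewrite (RInt_Reals (dV K v) (- tau) 0 pr1), (RInt_Reals psit _ b pr2). exact Hlt.
Qed.

Lemma dX_lag_bound : (0 < d)%nat -> flocking_condition tau K psit eta v ->
  exists b, forall t, 0 <= t -> dX K eta (t - tau) + R_V * tau < b.
Proof.
  intros Hd Hfl. destruct (flocking_condition_ext Hfl) as [b Hb].
  exists b. intros t Ht. rewrite <- dX_ext_eq by lra.
  apply (delayed_lyapunov_bound tau R_V dV_ext dX_ext psit_ext); auto using dV_ext_cont, dX_ext_cont,
    psit_ext_cont, psit_ext_pos, psit_ext_le_1, psit_ext_noninc, dV_ext_nonneg, dV_ext_relax, dX_ext_growth.
Qed.

Lemma dX_bounded : (0 < d)%nat -> flocking_condition tau K psit eta v ->
  exists M, forall t, 0 <= t -> dX K eta t <= M.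
Proof.
  intros Hd Hfl. destruct (dX_lag_bound Hd Hfl) as [b Hb]. exists b. intros t Ht.
  pose proof (Hb (t + tau) ltac:(lra)). replace (t + tau - tau) with t in H by ring.
  pose proof R_V_nonneg. nra.
Qed.

(* Once dX (t - tau) + R_V tau stays below b, every communication weight is at least psit b,
   and the relaxation inequality for dV becomes linear with rate psit b. *)
Lemma dV_exp_decay : (0 < d)%nat -> flocking_condition tau K psit eta v ->
  exists C, 0 < C /\ forall t, 0 <= t ->
    dV K v t <= Rsup (fun r => exists s, -tau <= s <= 0 /\ r = dV K v s) * exp (- C * t).
Proof.
  intros Hd Hfl. destruct (dX_lag_bound Hd Hfl) as [b Hb].
  pose proof (psit_ext_pos b) as Hps.
  exists (decay_rate tau (psit_ext b)). split; [apply decay_rate_pos; auto|]. intros t Ht.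
  set (D := Rsup (fun r => exists s, -tau <= s <= 0 /\ r = dV K v s)).
  assert (HD : is_lub (fun r => exists s, -tau <= s <= 0 /\ r = dV K v s) D).
  { apply Rsup_is_lub.
    - exists (dV K v 0). exists 0; split; auto; lra.
    - exists (2 * R_V). intros r [s [Hs ->]]. apply dV_le_2R_V; lra. }
  rewrite <- dV_ext_eq by lra.
  apply (delayed_relaxation_decay tau (psit_ext b) dV_ext); auto using psit_ext_le_1, dV_ext_cont, dV_ext_nonneg.
  - intros t' h c Ht' Hh Hc. apply dV_ext_relax; auto. intros s Hs.
    eapply Rle_trans; [|apply (Hc s Hs)]. apply Rmult_le_compat_r; [apply dV_ext_nonneg|].
    pose proof (Hb s ltac:(lra)). rewrite <- dX_ext_eq in H by lra.
    pose proof (psit_ext_noninc _ _ (Rlt_le _ _ H)). lra.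
  - intros s Hs. rewrite dV_ext_eq by lra. apply (is_lub_ub _ _ _ HD). exists s; auto.
Qed.

End FlockingSolution.

Lemma flocking_dim0 tau (K : Vec 0 -> Prop) (eta v : R -> Vec 0 -> Vec 0) x0 : 0 <= tau -> K x0 ->
  (exists M, forall t, 0 <= t -> dX K eta t <= M) /\
  (exists C, 0 < C /\ forall t, 0 <= t ->
     dV K v t <= Rsup (fun r => exists s, -tau <= s <= 0 /\ r = dV K v s) * exp (- C * t)).
Proof.
  intros Htau Hx0.
  assert (DX : forall t, dX K eta t = 0).
  { intro t. apply Rsup_eq_0; [exists x0, x0; rewrite vnorm_dim0; auto|].
    intros r [x [y [_ [_ ->]]]]. apply vnorm_dim0. }
  assert (DV : forall t, dV K v t = 0).
  { intro t. apply Rsup_eq_0; [exists x0, x0; rewrite vnorm_dim0; auto|].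
    intros r [x [y [_ [_ ->]]]]. apply vnorm_dim0. }
  split; [exists 0; intros t _; rewrite DX; lra|].
  exists 1. split; [lra|]. intros t _. rewrite DV. apply Rmult_le_pos; [|apply Rlt_le, exp_pos].
  rewrite Rsup_eq_0; [lra | exists 0; split; [lra | rewrite DV; auto] |].
  intros r [s [_ ->]]. apply DV.
Qed.

Theorem theorem2p2 (d : nat) (tau : R) (Om : Vec d -> Prop)
    (I : (Vec d -> R) -> R) (psi : Vec d -> R) (psit : R -> R)
    (eta v : R -> Vec d -> Vec d) :
  0 <= tau ->
  is_open Om -> is_bounded Om ->
  avg_functional (closure Om) I ->
  assumption_A0 psi psit ->
  C1_into_C (closure Om) eta ->
  jcont_on tau (closure Om) v ->
  history_compatible tau (closure Om) eta v ->
  solves_L tau Om I psi eta v ->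
  (exists B, forall s x, -tau <= s <= 0 -> closure Om x -> vnorm (v s x) <= B) ->
  flocking_condition tau (closure Om) psit eta v ->
  (exists M, forall t, 0 <= t -> dX (closure Om) eta t <= M) /\
  (exists C, 0 < C /\ forall t, 0 <= t ->
     dV (closure Om) v t <=
       Rsup (fun r => exists s, -tau <= s <= 0 /\ r = dV (closure Om) v s) * exp (- C * t)).
Proof.
  intros Htau _ Hbdd HI HA0 HC1 Hjc Hhist HL [B HB] Hfl.
  (* Continuity of psit is read off psi along a unit vector, which needs d > 0; in dimension 0
     all diameters vanish. *)
  destruct d as [|d'].
  - destruct (domain_nonempty 0 Om I HI) as [x0 Hx0].
    exact (flocking_dim0 tau _ eta v x0 Htau (closure_incl Hx0)).
  - assert (Hd : (0 < S d')%nat) by lia.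
    split; [eapply dX_bounded | eapply dV_exp_decay]; eauto.
Qed.
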